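(* Let $X$ be a compact Hausdorff space and $k>0$. For a bundle $(E,X,\pi)$ of complete metric spaces bounded by $k$, let $\mathcal R(E)$ assign to $x$ the fibre $E_x$, with maps $\sigma_\mu$ defined as follows: for an ultrafilter $\mu$ on $X$ converging to $x$ and $f\in E_x$, $\sigma_\mu(f)\in\int_XE_y\,d\mu$ is the limit of the Cauchy filter generated by the sets $A_W$ ($W$ open neighbourhood of $f$); for a set $S$, a map $M:S\to X$ and an ultrafilter $\mu$ on $S$ with $M\mu\to x$, if $\sigma_{M\mu}(f)=(b_y)_{y\in X}$ then $\sigma_\mu(f)=(b_{M(s)})_{s\in S}$; on morphisms $\mathcal R(\psi)_x=\psi|_{E_x}$. Then $\mathcal R(E)$ is a left ultrafunctor from $X$ to $\mathsf{k\text{-}CompMet}$, $\mathcal R$ is a functor, and $\mathcal L$ and $\mathcal R$ are mutually quasi-inverse equivalences of categories $\mathrm{LeftUlt}(X,\mathsf{k\text{-}CompMet})\simeq\mathrm{Bun}(\mathsf{k\text{-}CompMet},X)$ (with $\mathcal L\dashv\mathcal R$ and unit and counit isomorphisms).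
   Context: Ultrafilter conventions: $\delta_s$ principal; pushforward $g\mu=\{B:g^{-1}B\in\mu\}$; $\int_S\nu_sd\mu=\{B:\{s:B\in\nu_s\}\in\mu\}$; for compact Hausdorff $X$, $\int_Sx_sd\mu$ is the limit of the pushforward of $\mu$ along $s\mapsto x_s$. $\mathsf{k\text{-}CompMet}$: complete metric spaces with distances $\le k$ and 1-Lipschitz maps; ultraproduct $\int_SM_sd\mu=\prod M_s/\{\lim_\mu d(a_s,b_s)=0\}$ with metric $\lim_\mu d(a_s,b_s)$ (classes may be given on a set of $\mu$). Left ultrafunctor from $X$ to $\mathsf{k\text{-}CompMet}$: objects $\mathcal F(x)$ and, for each set $S$, family $(x_s)$ in $X$, ultrafilter $\mu$ on $S$, a 1-Lipschitz $\sigma_\mu:\mathcal F(\int_Sx_sd\mu)\to\int_S\mathcal F(x_s)d\mu$ with (i) $\sigma_{\delta_{s_0}}$ followed by $\int_S\mathcal F(x_s)d\delta_{s_0}\cong\mathcal F(x_{s_0})$ is the identity, (ii) for $\mu$ on $S$, $(\nu_s)_{s\in S}$ on $T$, $(x_t)_{t\in T}$ with $y_s=\int_Tx_td\nu_s$: $\Delta\circ\sigma_{\int_S\nu_sd\mu}=(\int_S\sigma_{\nu_s}d\mu)\circ\sigma_\mu$ where $\sigma_\mu$ is for the family $(y_s)$ and $\Delta((b_t)_{t})=((b_t)_t)_{s}$. Morphisms: natural transformations of left ultrafunctors, families of 1-Lipschitz $\alpha_x$ with $\sigma^{\mathcal G}_\mu\circ\alpha_{\int x_sd\mu}=(\int_S\alpha_{x_s}d\mu)\circ\sigma^{\mathcal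 F}_\mu$. Bundle of complete metric spaces bounded by $k$ over $X$: $\pi:E\to X$ surjective, fibres $E_x$ complete metric with distances $\le k$, with (1) global distance on $E\times_XE$ upper semicontinuous, (2) $\pi$ continuous open, (3) for open $W$ and $f\in W$ there are an open $V\ni f$ and $\epsilon>0$ with $V\subseteq V_\epsilon\subseteq W$ ($V_\epsilon=\{g:\exists h\in V,\pi g=\pi h,d(g,h)<\epsilon\}$). Morphisms: continuous maps over $X$ that are 1-Lipschitz on fibres. $\mathcal L(\mathcal F)=\coprod_x\mathcal F(x)$ with the unique topology in which an ultrafilter $\eta$ converges to $f$ iff $\pi\eta\to\pi(f)$ and $\coprod_xB(b_x,\epsilon)\in\eta$ for all $\epsilon>0$, where $(b_x)$ represents $\sigma_{\pi\eta}(f)$ (identity family on $X$); $\mathcal L(\alpha)|_{\mathcal F(x)}=\alpha_x$. $A_W=\{(b_y)_{y\in X}\in\int_XE_yd\mu:\exists U\in\mu,\exists\epsilon>0,\coprod_{y\in U}B(b_y,\epsilon)\subseteq W\}$. *)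

From Stdlib Require Import Reals List Classical ClassicalEpsilon ProofIrrelevance.
Open Scope R_scope.

Record ultrafilter (S : Type) := {
  uf :> (S -> Prop) -> Prop;
  uf_T : uf (fun _ => True);
  uf_0 : ~ uf (fun _ => False);
  uf_up : forall A B : S -> Prop, (forall s, A s -> B s) -> uf A -> uf B;
  uf_I : forall A B : S -> Prop, uf A -> uf B -> uf (fun s => A s /\ B s);
  uf_max : forall A : S -> Prop, uf A \/ uf (fun s => ~ A s) }.
Arguments uf {S}.
Arguments uf_T {S}. Arguments uf_0 {S}. Arguments uf_up {S}.
Arguments uf_I {S}. Arguments uf_max {S}.

Definition principal {S : Type} (s0 : S) : ultrafilter S.
Proof.
  refine {| uf := fun A => A s0 |}; simpl; auto.
  intros A; apply classic.
Defined.

Definition push {S T : Type} (g : S -> T) (mu : ultrafilter S) : ultrafilter T.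
Proof.
  refine {| uf := fun B => mu (fun s => B (g s)) |}.
  - exact (uf_T mu).
  - exact (uf_0 mu).
  - intros A B h; apply uf_up; intros s; apply h.
  - intros A B; apply (uf_I mu).
  - intros A; apply (uf_max mu (fun s => A (g s))).
Defined.

(* integral  \int_S nu_s dmu = {B : {s : B in nu_s} in mu} *)
Definition uint {S T : Type} (mu : ultrafilter S) (nu : S -> ultrafilter T)
  : ultrafilter T.
Proof.
  refine {| uf := fun B => mu (fun s => nu s B) |}.
  - apply (uf_up mu (fun _ => True)); [intros s _; apply uf_T | apply uf_T].
  - intros h; apply (uf_0 mu); apply (uf_up mu _ _ (fun s hs => uf_0 (nu s) hs) h).
  - intros A B hAB; apply uf_up; intros s; apply uf_up; exact hAB.
  - intros A B hA hB; apply (uf_up mu _ _ (fun s h => uf_I (nu s) A B (proj1 h) (proj2 h))).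
    apply uf_I; assumption.
  - intros A. destruct (uf_max mu (fun s => nu s A)) as [h|h]; [left; exact h|right].
    apply (uf_up mu _ _ (fun s hs => match uf_max (nu s) A with
                                     | or_introl a => False_ind _ (hs a)
                                     | or_intror b => b end) h).
Defined.

Lemma uf_inhabited {S : Type} (mu : ultrafilter S) : inhabited S.
Proof.
  destruct (classic (inhabited S)) as [h|h]; [exact h|].
  exfalso; apply (uf_0 mu).
  apply (uf_up mu (fun _ => True)); [intros s _; apply h; exact (inhabits s)|apply uf_T].
Qed.

Definition ulimR {S : Type} (mu : ultrafilter S) (f : S -> R) : R :=
  epsilon (inhabits 0) (fun r => forall eps, 0 < eps -> mu (fun s => Rabs (f s - r) < eps)).

Record Space := {
  pt :> Type;
  opn : (pt -> Prop) -> Prop;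
  opn_full : opn (fun _ => True);
  opn_inter : forall A B, opn A -> opn B -> opn (fun x => A x /\ B x);
  opn_union : forall (I : Type) (F : I -> pt -> Prop),
      (forall i, opn (F i)) -> opn (fun x => exists i, F i x) }.
Arguments opn {s}.

Definition hausdorff_space (X : Space) : Prop :=
  forall x y : X, x <> y -> exists U V, opn U /\ opn V /\ U x /\ V y /\
    forall z, U z -> V z -> False.

Definition compact_space (X : Space) : Prop :=
  forall (I : Type) (U : I -> X -> Prop), (forall i, opn (U i)) ->
    (forall x, exists i, U i x) ->
    exists l : list I, forall x, exists i, In i l /\ U i x.

Definition tcontinuous {X Y : Space} (f : X -> Y) : Prop :=
  forall W : Y -> Prop, opn W -> opn (fun x => W (f x)).

Definition open_map {X Y : Space} (f : X -> Y) : Prop :=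
  forall U : X -> Prop, opn U -> opn (fun y => exists x, U x /\ f x = y).

Definition conv {X : Space} (nu : ultrafilter X) (p : X) : Prop :=
  forall W, opn W -> W p -> nu W.

(* the limit of an ultrafilter (unique in a compact_space Hausdorff space) *)
Definition ulimX {X : Space} (nu : ultrafilter X) : X :=
  epsilon (uf_inhabited nu) (conv nu).

(* \int_S x_s dmu : limit of the pushforward of mu along s |-> x_s *)
Definition ulim {X : Space} {S : Type} (x : S -> X) (mu : ultrafilter S) : X :=
  ulimX (push x mu).

Definition complete_dist {M : Type} (d : M -> M -> R) : Prop :=
  forall u : nat -> M,
    (forall eps, 0 < eps -> exists N, forall m n, (N <= m)%nat -> (N <= n)%nat -> d (u m) (u n) < eps) ->
    exists l, forall eps, 0 < eps -> exists N, forall n, (N <= n)%nat -> d (u n) l < eps.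

(* M with d is an object of k-CompMet: complete metric space, distances <= k *)
Definition is_kmet (k : R) {M : Type} (d : M -> M -> R) : Prop :=
  (forall a b, 0 <= d a b /\ d a b <= k) /\
  (forall a b, d a b = 0 <-> a = b) /\
  (forall a b, d a b = d b a) /\
  (forall a b c, d a c <= d a b + d b c) /\
  complete_dist d.

(* elements: families defined on a set belonging to mu *)
Definition UP {S : Type} (mu : ultrafilter S) (M : S -> Type) : Type :=
  { a : forall s, option (M s) | mu (fun s => a s <> None) }.

Definition up_dist {S : Type} (mu : ultrafilter S) {M : S -> Type}
  (D : forall s, M s -> M s -> R) (a b : UP mu M) : R :=
  ulimR mu (fun s => match proj1_sig a s, proj1_sig b s with
                     | Some u, Some v => D s u v
                     | _, _ => 0 end).

(* \int_S phi_s dmu : componentwise map *)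
Definition upmap {S : Type} {mu : ultrafilter S} {M N : S -> Type}
  (phi : forall s, M s -> N s) (a : UP mu M) : UP mu N.
Proof.
  exists (fun s => option_map (phi s) (proj1_sig a s)).
  refine (uf_up mu _ _ _ (proj2_sig a)).
  intros s h; cbv beta in *; destruct (proj1_sig a s); simpl;
     [intro E; discriminate E|contradiction].
Defined.

(* Delta : \int_T M_t d(\int_S nu_s dmu) -> \int_S (\int_T M_t dnu_s) dmu,
   ((b_t)_t) |-> (((b_t)_t)_s) *)
Definition Delta {S T : Type} {mu : ultrafilter S} {nu : S -> ultrafilter T}
  {M : T -> Type} (a : UP (uint mu nu) M) : UP mu (fun s => UP (nu s) M).
Proof.
  exists (fun s => match excluded_middle_informative
                          (nu s (fun t => proj1_sig a t <> None)) with
                   | left h => Some (exist _ (proj1_sig a) h)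
                   | right _ => None end).
  refine (uf_up mu _ _ _ (proj2_sig a)).
  intros s h; cbv beta in *;
     destruct (excluded_middle_informative _) as [h'|h'];
     [intro E; discriminate E|contradiction].
Defined.

Record LUdata (X : Space) := {
  lu_car : X -> Type;
  lu_d : forall x, lu_car x -> lu_car x -> R;
  lu_ne : forall x, inhabited (lu_car x);
  lu_sig : forall (S : Type) (x : S -> X) (mu : ultrafilter S),
      lu_car (ulim x mu) -> UP mu (fun s => lu_car (x s)) }.
Arguments lu_car {X}. Arguments lu_d {X}. Arguments lu_ne {X}. Arguments lu_sig {X}.

Definition is_LeftUlt {X : Space} (k : R) (F : LUdata X) : Prop :=
  (forall x, is_kmet k (lu_d F x)) /\
  (forall S (x : S -> X) (mu : ultrafilter S) (a b : lu_car F (ulim x mu)),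
      up_dist mu (fun s => lu_d F (x s)) (lu_sig F S x mu a) (lu_sig F S x mu b)
      <= lu_d F _ a b) /\
  (* (i) *)
  (forall S (x : S -> X) (s0 : S) (e : ulim x (principal s0) = x s0)
          (a : lu_car F (ulim x (principal s0))),
      proj1_sig (lu_sig F S x (principal s0) a) s0 = Some (eq_rect _ (lu_car F) a _ e)) /\
  (* (ii) *)
  (forall S T (mu : ultrafilter S) (nu : S -> ultrafilter T) (x : T -> X)
          (e : ulim (fun s => ulim x (nu s)) mu = ulim x (uint mu nu))
          (a : lu_car F (ulim (fun s => ulim x (nu s)) mu)),
      up_dist mu (fun s => up_dist (nu s) (fun t => lu_d F (x t)))
        (Delta (lu_sig F T x (uint mu nu) (eq_rect _ (lu_car F) a _ e)))
        (upmap (fun s => lu_sig F T x (nu s))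
               (lu_sig F S (fun s => ulim x (nu s)) mu a)) = 0).

Definition is_LUmor {X : Space} (F G : LUdata X) (al : forall x, lu_car F x -> lu_car G x)
  : Prop :=
  (forall x a b, lu_d G x (al x a) (al x b) <= lu_d F x a b) /\
  (forall S (x : S -> X) (mu : ultrafilter S) (a : lu_car F (ulim x mu)),
      up_dist mu (fun s => lu_d G (x s))
        (lu_sig G S x mu (al _ a))
        (upmap (fun s => al (x s)) (lu_sig F S x mu a)) = 0).

Definition LU_iso {X : Space} (F G : LUdata X) (al : forall x, lu_car F x -> lu_car G x)
  : Prop :=
  is_LUmor F G al /\
  exists be : forall x, lu_car G x -> lu_car F x,
    is_LUmor G F be /\ (forall x a, be x (al x a) = a) /\ (forall x b, al x (be x b) = b).

Record BunData (X : Space) := {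
  tot : Space;
  proj : tot -> X;
  proj_surj : forall x, exists e, proj e = x;
  bd : tot -> tot -> R  (* global distance, meaningful on E x_X E *) }.
Arguments tot {X}. Arguments proj {X}. Arguments proj_surj {X}. Arguments bd {X}.

Definition fib {X : Space} (E : BunData X) (x : X) : Type := { e : tot E | proj E e = x }.
Definition fdist {X : Space} (E : BunData X) (x : X) (a b : fib E x) : R :=
  bd E (proj1_sig a) (proj1_sig b).

Definition is_Bundle {X : Space} (k : R) (E : BunData X) : Prop :=
  (forall x, is_kmet k (fdist E x)) /\
  (* (1) upper semicontinuity of the distance on E x_X E *)
  (forall e f : tot E, proj E e = proj E f -> forall r, bd E e f < r ->
     exists U V, opn U /\ opn V /\ U e /\ V f /\
       forall e' f', U e' -> V f' -> proj E e' = proj E f' -> bd E e' f' < r) /\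
  tcontinuous (proj E) /\ open_map (proj E) /\
  (* (3) *)
  (forall W : tot E -> Prop, opn W -> forall f, W f ->
     exists V eps, opn V /\ V f /\ 0 < eps /\
       (forall g, V g -> exists h, V h /\ proj E g = proj E h /\ bd E g h < eps) /\
       (forall g, (exists h, V h /\ proj E g = proj E h /\ bd E g h < eps) -> W g)).

Definition over {X : Space} (E E' : BunData X) (psi : tot E -> tot E') : Prop :=
  forall e, proj E' (psi e) = proj E e.

Definition is_Bmor {X : Space} (E E' : BunData X) (psi : tot E -> tot E') : Prop :=
  over E E' psi /\ tcontinuous psi /\
  (forall e f, proj E e = proj E f -> bd E' (psi e) (psi f) <= bd E e f).

Definition Bun_iso {X : Space} (E E' : BunData X) (psi : tot E -> tot E') : Prop :=
  is_Bmor E E' psi /\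
  exists phi : tot E' -> tot E,
    is_Bmor E' E phi /\ (forall e, phi (psi e) = e) /\ (forall e, psi (phi e) = e).

Lemma UP_fib_inh {X : Space} (E : BunData X) (nu : ultrafilter X) : inhabited (UP nu (fib E)).
Proof.
  assert (H : forall x, inhabited (fib E x)).
  { intros x; destruct (proj_surj E x) as [e he]; exact (inhabits (exist _ e he)). }
  destruct (classic (inhabited (UP nu (fib E)))) as [h|h]; [exact h|exfalso].
  apply h. constructor.
  exists (fun x => Some (epsilon (H x) (fun _ => True))).
  apply (uf_up nu (fun _ => True)); [intros; discriminate|apply uf_T].
Qed.

Definition A_W {X : Space} (E : BunData X) (nu : ultrafilter X) (W : tot E -> Prop)
  (b : UP nu (fib E)) : Prop :=
  exists U, nu U /\ exists eps, 0 < eps /\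
    forall y, U y -> exists z, proj1_sig b y = Some z /\
      forall g : fib E y, fdist E y z g < eps -> W (proj1_sig g).

(* sigma_nu(f) for nu on X : limit of the Cauchy filter generated by the A_W *)
Definition sigX {X : Space} (E : BunData X) (nu : ultrafilter X)
  (f : fib E (ulimX nu)) : UP nu (fib E) :=
  epsilon (UP_fib_inh E nu)
    (fun a => forall eps, 0 < eps -> exists W, opn W /\ W (proj1_sig f) /\
        forall b, A_W E nu W b -> up_dist nu (fdist E) a b < eps).

Definition Rsig {X : Space} (E : BunData X) (S : Type) (M : S -> X) (mu : ultrafilter S)
  (f : fib E (ulim M mu)) : UP mu (fun s => fib E (M s)) :=
  let b := sigX E (push M mu) f in exist _ (fun s => proj1_sig b (M s)) (proj2_sig b).

Definition R_obj {X : Space} (E : BunData X) : LUdata X.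
Proof.
  refine {| lu_car := fib E; lu_d := fdist E; lu_sig := Rsig E |}.
  intros x; destruct (proj_surj E x) as [e he]; exact (inhabits (exist _ e he)).
Defined.

Definition R_mor {X : Space} {E E' : BunData X} {psi : tot E -> tot E'}
  (h : over E E' psi) (x : X) (a : fib E x) : fib E' x :=
  exist _ (psi (proj1_sig a)) (eq_trans (h (proj1_sig a)) (proj2_sig a)).

Definition Lcar {X : Space} (F : LUdata X) : Type := { x : X & lu_car F x }.

Definition Ld {X : Space} (F : LUdata X) (g h : Lcar F) : R :=
  match excluded_middle_informative (projT1 g = projT1 h) with
  | left e => lu_d F _ (eq_rect _ (lu_car F) (projT2 g) _ e) (projT2 h)
  | right _ => 0 end.

(* eta -> f : pi eta -> pi f and  coprod_x B(b_x, eps) in eta for all eps,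
   (b_x) representing sigma_{pi eta}(f) (identity family on X) *)
Definition Lconv {X : Space} (F : LUdata X) (eta : ultrafilter (Lcar F)) (f : Lcar F)
  : Prop :=
  conv (push (@projT1 _ _) eta) (projT1 f) /\
  exists e : projT1 f = ulim (fun y : X => y) (push (@projT1 _ _) eta),
    let b := lu_sig F X (fun y => y) (push (@projT1 _ _) eta)
               (eq_rect _ (lu_car F) (projT2 f) _ e) in
    forall eps, 0 < eps ->
      eta (fun g => exists z, proj1_sig b (projT1 g) = Some z /\
                              lu_d F (projT1 g) z (projT2 g) < eps).

Definition Lspace {X : Space} (F : LUdata X) : Space.
Proof.
  refine {| pt := Lcar F;
            opn := fun W => forall f, W f -> forall eta, Lconv F eta f -> eta W |}.
  - intros; apply uf_T.
  - intros A B hA hB f [a b] eta he; apply uf_I; [exact (hA f a eta he)|exact (hB f b eta he)].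
  - intros I G hG f [i hi] eta he.
    apply (uf_up eta (G i)); [intros s hs; exists i; exact hs|].
    apply (hG i f hi eta he).
Defined.

Definition L_obj {X : Space} (F : LUdata X) : BunData X.
Proof.
  refine {| tot := Lspace F; proj := @projT1 _ _; bd := Ld F |}.
  intros x; destruct (lu_ne F x) as [a]; exists (existT _ x a); reflexivity.
Defined.

Definition L_mor {X : Space} {F G : LUdata X} (al : forall x, lu_car F x -> lu_car G x)
  (g : Lcar F) : Lcar G :=
  existT _ (projT1 g) (al (projT1 g) (projT2 g)).

From Pilot Require Import Defs.
From Stdlib Require Import Reals List Classical ClassicalEpsilon.
From Stdlib Require Import ProofIrrelevance FunctionalExtensionality PropExtensionality Lra Lia.
From mathcomp Require filter.
Open Scope R_scope.

(* Everything is phrased through convergence of ultrafilters.  For a bundle [E], [sigma_mu(f)]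
   is built by choosing, over a set of [mu], points within [1/(n+1)] of a shrinking sequence of
   neighbourhoods of [f]; upper semicontinuity of the distance and property (3) then show that
   such a section eventually enters every neighbourhood of [f], and the axioms of a left
   ultrafunctor follow from this.  For a left ultrafunctor [F], the convergence defining [L(F)]
   satisfies the principal axiom (by (i)) and the diagonal axiom (by (ii)), so by Barr's
   theorem it is the convergence of the topology it generates; the bundle axioms of [L(F)] are
   then proved by contradiction, from ultrafilters on bad witnesses.  Unit and counit are the
   identity on fibres; their continuity again reduces to sections eventually entering
   neighbourhoods. *)

(** * Ultrafilters and ultralimits of reals *)

Lemma uf_ext {S} (mu nu : ultrafilter S) : (forall A, mu A <-> nu A) -> mu = nu.
Proof.
  destruct mu as [u1 a1 b1 c1 d1 e1], nu as [u2 a2 b2 c2 d2 e2]; simpl; intros H.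
  assert (u1 = u2) by (apply functional_extensionality; intro A;
                       apply propositional_extensionality; apply H).
  subst u2. f_equal; apply proof_irrelevance.
Qed.

Lemma uf_mono {S} (mu : ultrafilter S) (A B : S -> Prop) :
  mu A -> (forall s, A s -> B s) -> mu B.
Proof. intros h1 h2; exact (uf_up mu A B h2 h1). Qed.

Lemma uf_nonempty {S} (mu : ultrafilter S) (A : S -> Prop) : mu A -> exists s, A s.
Proof.
  intros h; apply NNPP; intros n.
  apply (uf_0 mu); apply (uf_mono mu A); [exact h|].
  intros s hs; apply n; exists s; exact hs.
Qed.

Lemma uf_all {S} (mu : ultrafilter S) (A : S -> Prop) : (forall s, A s) -> mu A.
Proof. intros h; apply (uf_mono mu (fun _ => True)); [apply uf_T|intros; apply h]. Qed.

Lemma uf_compl {S} (mu : ultrafilter S) (A : S -> Prop) : ~ mu A -> mu (fun s => ~ A s).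
Proof. intros h; destruct (uf_max mu A); [contradiction|assumption]. Qed.

Lemma uf_not_compl {S} (mu : ultrafilter S) (A : S -> Prop) :
  mu A -> mu (fun s => ~ A s) -> False.
Proof.
  intros h1 h2; destruct (uf_nonempty mu _ (uf_I mu _ _ h1 h2)) as [s [a b]]; auto.
Qed.

Lemma ultrafilter_extends_base {T} (P : (T -> Prop) -> Prop) :
  (exists A, P A) ->
  (forall A B, P A -> P B -> exists C, P C /\ forall t, C t -> A t /\ B t) ->
  (forall A, P A -> exists t, A t) ->
  exists u : ultrafilter T, forall A, P A -> u A.
Proof.
  intros hne hint hnon.
  assert (hF : filter.ProperFilter (filter.filter_from P (fun A => A))).
  { apply filter.filter_from_proper.
    - apply filter.filter_from_filter; [exact hne|].
      intros A B hA hB; destruct (hint A B hA hB) as [C [hC hCAB]]; exists C; [exact hC|exact hCAB].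
    - intros A hA; destruct (hnon A hA) as [t ht]; exists t; exact ht. }
  destruct (filter.ultraFilterLemma hF) as [G [hG hFG]].
  unshelve eexists {| uf := G |}.
  - exact filter.filterT.
  - exact (filter.filter_not_empty G).
  - intros A B hAB hA; exact (filter.filterS hAB hA).
  - intros A B hA hB; exact (filter.filterI hA hB).
  - intros A; exact (filter.in_ultra_setVsetC A hG).
  - intros A hA; apply hFG; exists A; [exact hA|intros t ht; exact ht].
Qed.

Lemma Rabs_le_inv a K : Rabs a <= K -> - K <= a <= K.
Proof. intros h; pose proof (Rle_abs a); pose proof (Rle_abs (-a)); rewrite Rabs_Ropp in *; lra. Qed.

Lemma inv_INR_S_pos (n : nat) : 0 < / INR (S n).
Proof. apply Rinv_0_lt_compat; apply lt_0_INR; lia. Qed.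

Lemma inv_INR_S_le (m n : nat) : (n <= m)%nat -> / INR (S m) <= / INR (S n).
Proof. intros h; apply Rinv_le_contravar; [apply lt_0_INR; lia|apply le_INR; lia]. Qed.

Lemma inv_INR_S_lt eps : 0 < eps -> exists n, / INR (S n) < eps.
Proof.
  intros he; destruct (archimed_cor1 eps he) as [N [h1 h2]].
  exists N; eapply Rle_lt_trans; [|exact h1].
  apply Rinv_le_contravar; [apply lt_0_INR; lia|apply le_INR; lia].
Qed.

Section UltraLimit.
Context {S : Type} (mu : ultrafilter S) (f : S -> R) (K : R).
Hypothesis f_bounded : forall s, Rabs (f s) <= K.

Lemma ulimR_exists : exists r, forall eps, 0 < eps -> mu (fun s => Rabs (f s - r) < eps).
Proof.
  set (E := fun r => mu (fun s => r <= f s)).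
  assert (hbd : bound E).
  { exists K; intros r hr; destruct (Rle_or_lt r K) as [h|h]; [exact h|exfalso].
    apply (uf_0 mu); apply (uf_mono mu _ _ hr); intros s hs.
    pose proof (Rabs_le_inv _ _ (f_bounded s)); lra. }
  assert (hne : exists x, E x).
  { exists (-K); apply uf_all; intros s; pose proof (Rabs_le_inv _ _ (f_bounded s)); lra. }
  destruct (completeness E hbd hne) as [L [hub hlub]].
  exists L; intros eps heps.
  assert (h1 : exists r, E r /\ L - eps < r).
  { apply NNPP; intros n.
    assert (L <= L - eps); [|lra].
    apply hlub; intros r hr; apply Rnot_lt_le; intros h; apply n; exists r; auto. }
  destruct h1 as [r [hr hlt]].
  assert (h2 : ~ E (L + eps / 2)) by (intros he; specialize (hub _ he); lra).
  apply uf_compl in h2.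
  apply (uf_mono mu _ _ (uf_I mu _ _ hr h2)); intros s [a b].
  apply Rabs_def1; lra.
Qed.

Lemma ulimR_spec eps : 0 < eps -> mu (fun s => Rabs (f s - ulimR mu f) < eps).
Proof.
  revert eps; unfold ulimR.
  apply (epsilon_spec (inhabits 0) (fun r => forall eps, 0 < eps -> mu (fun s => Rabs (f s - r) < eps))).
  exact ulimR_exists.
Qed.

Lemma ulimR_le c : mu (fun s => f s <= c) -> ulimR mu f <= c.
Proof.
  intros hc; apply Rnot_lt_le; intros h.
  assert (he : 0 < ulimR mu f - c) by lra.
  destruct (uf_nonempty mu _ (uf_I mu _ _ hc (ulimR_spec _ he))) as [s [a b]].
  apply Rabs_def2 in b; lra.
Qed.

Lemma ulimR_ge c : mu (fun s => c <= f s) -> c <= ulimR mu f.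
Proof.
  intros hc; apply Rnot_lt_le; intros h.
  assert (he : 0 < c - ulimR mu f) by lra.
  destruct (uf_nonempty mu _ (uf_I mu _ _ hc (ulimR_spec _ he))) as [s [a b]].
  apply Rabs_def2 in b; lra.
Qed.

Lemma ulimR_lt c : ulimR mu f < c -> mu (fun s => f s < c).
Proof.
  intros hc.
  assert (he : 0 < c - ulimR mu f) by lra.
  apply (uf_mono mu _ _ (ulimR_spec _ he)); intros s b.
  apply Rabs_def2 in b; lra.
Qed.

End UltraLimit.

(** * Topology through ultrafilters *)

Lemma opn_ext (X : Space) (A B : X -> Prop) : (forall x, A x <-> B x) -> opn A -> opn B.
Proof.
  intros h hA; replace B with A; [exact hA|].
  apply functional_extensionality; intro x; apply propositional_extensionality; apply h.
Qed.

(* If some [x] in [O] has no open neighbourhood inside [O], the sets [U \ O], [U] an open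
   neighbourhood of [x], generate an ultrafilter converging to [x] that misses [O]. *)
Lemma open_of_ultrafilter_nbhd (X : Space) (O : X -> Prop) :
  (forall x, O x -> forall nu : ultrafilter X, conv nu x -> nu O) -> opn O.
Proof.
  intros H.
  set (I := {U : X -> Prop | opn U /\ forall y, U y -> O y}).
  apply (opn_ext X (fun x => exists i : I, proj1_sig i x)).
  2:{ apply opn_union; intros [U [hU hUO]]; exact hU. }
  intros x; split; [intros [[U [hU hUO]] hx]; exact (hUO x hx)|intros hx].
  apply NNPP; intros hn.
  set (P := fun A : X -> Prop => exists U, opn U /\ U x /\ A = (fun y => U y /\ ~ O y)).
  destruct (ultrafilter_extends_base P) as [nu hnu].
  - exists (fun y => True /\ ~ O y), (fun _ => True); split; [apply opn_full|split; auto].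
  - intros A B [U [hU [hx1 ->]]] [V [hV [hx2 ->]]].
    exists (fun y => (U y /\ V y) /\ ~ O y); split.
    + exists (fun y => U y /\ V y); split; [apply opn_inter; auto|split; auto].
    + intros t [[a b] c]; auto.
  - intros A [U [hU [hxU ->]]]. apply NNPP; intros hne; apply hn.
    exists (exist _ U (conj hU (fun y hy => NNPP _ (fun h => hne (ex_intro _ y (conj hy h)))))).
    exact hxU.
  - assert (hc : conv nu x).
    { intros W hW hWx; apply (uf_mono nu (fun y => W y /\ ~ O y)); [|intros s [a _]; exact a].
      apply hnu; exists W; auto. }
    apply (uf_not_compl nu O (H x hx nu hc)).
    apply (uf_mono nu (fun y => True /\ ~ O y)); [|intros s [_ b]; exact b].
    apply hnu; exists (fun _ => True); split; [apply opn_full|split; auto].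
Qed.

Lemma compact_ultrafilter_conv (X : Space) : compact_space X ->
  forall nu : ultrafilter X, exists x, conv nu x.
Proof.
  intros hc nu; apply NNPP; intros hn.
  set (I := {W : X -> Prop | opn W /\ ~ nu W}).
  destruct (hc I (fun i => proj1_sig i)) as [l hl].
  - intros [W [hW hnW]]; exact hW.
  - intros x; apply NNPP; intros hx; apply hn; exists x.
    intros W hW hWx; apply NNPP; intros hnW; apply hx.
    exists (exist _ W (conj hW hnW)); exact hWx.
  - assert (hu : nu (fun x => exists i, In i l /\ proj1_sig i x)) by (apply uf_all; exact hl).
    clear hl hn. induction l as [|i l IH].
    + apply (uf_0 nu); apply (uf_mono nu _ _ hu); intros x [i [[] _]].
    + apply IH. destruct (uf_max nu (proj1_sig i)) as [h|h].
      * exfalso; exact (proj2 (proj2_sig i) h).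
      * apply (uf_mono nu _ _ (uf_I nu _ _ hu h)); intros x [[j [hj hjx]] hnx].
        destruct hj as [<-|hj]; [contradiction|exists j; auto].
Qed.

Lemma hausdorff_conv_unique (X : Space) : hausdorff_space X ->
  forall (nu : ultrafilter X) x y, conv nu x -> conv nu y -> x = y.
Proof.
  intros hh nu x y hx hy; apply NNPP; intros hn.
  destruct (hh x y hn) as [U [V [hU [hV [hUx [hVy hd]]]]]].
  destruct (uf_nonempty nu _ (uf_I nu _ _ (hx U hU hUx) (hy V hV hVy))) as [z [a b]].
  exact (hd z a b).
Qed.

Lemma conv_principal (X : Space) (x : X) : conv (principal x) x.
Proof. intros W _ h; exact h. Qed.

Lemma ultrafilter_of_nbhd_witnesses {A} {T : Space} (g1 g2 : A -> T) (e f : T)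
  (Q : nat -> A -> Prop) :
  (forall m n a, (n <= m)%nat -> Q m a -> Q n a) ->
  (forall U V n, opn U -> opn V -> U e -> V f -> exists a, U (g1 a) /\ V (g2 a) /\ Q n a) ->
  exists z : ultrafilter A, (forall n, z (Q n)) /\ conv (push g1 z) e /\ conv (push g2 z) f.
Proof.
  intros hQ hwit.
  set (P := fun B : A -> Prop => exists U V n, opn U /\ opn V /\ U e /\ V f /\
              B = (fun a => U (g1 a) /\ V (g2 a) /\ Q n a)).
  destruct (ultrafilter_extends_base P) as [z hz].
  - exists (fun a => True /\ True /\ Q 0%nat a), (fun _ => True), (fun _ => True), 0%nat.
    repeat split; auto; apply opn_full.
  - intros B C [U [V [n [hU [hV [hUe [hVf ->]]]]]]] [U' [V' [n' [hU' [hV' [hUe' [hVf' ->]]]]]]].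
    exists (fun a => (U (g1 a) /\ U' (g1 a)) /\ (V (g2 a) /\ V' (g2 a)) /\ Q (Nat.max n n') a); split.
    + exists (fun x => U x /\ U' x), (fun x => V x /\ V' x), (Nat.max n n').
      repeat split; auto; apply opn_inter; auto.
    + intros a [[h1 h2] [[h3 h4] h5]]; repeat split; auto; apply (hQ (Nat.max n n')); auto; lia.
  - intros B [U [V [n [hU [hV [hUe [hVf ->]]]]]]]; exact (hwit U V n hU hV hUe hVf).
  - assert (hbase : forall U V n, opn U -> opn V -> U e -> V f ->
                      z (fun a => U (g1 a) /\ V (g2 a) /\ Q n a)).
    { intros U V n hU hV hUe hVf; apply hz; exists U, V, n; repeat split; auto. }
    assert (hfull := opn_full T).
    exists z; split; [|split].
    + intros n; apply (uf_mono z _ _ (hbase _ _ n hfull hfull I I)); intros a [_ [_ h]]; exact h.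
    + intros U hU hUe; apply (uf_mono z _ _ (hbase _ _ 0%nat hU hfull hUe I)); intros a [h _]; exact h.
    + intros V hV hVf; apply (uf_mono z _ _ (hbase _ _ 0%nat hfull hV I hVf)); intros a [_ [h _]]; exact h.
Qed.

Section CompactHausdorff.
Variable X : Space.
Hypothesis X_compact : compact_space X.
Hypothesis X_hausdorff : hausdorff_space X.

Lemma ulimX_conv (nu : ultrafilter X) : conv nu (ulimX nu).
Proof.
  unfold ulimX; apply (epsilon_spec (uf_inhabited nu) (conv nu)).
  exact (compact_ultrafilter_conv X X_compact nu).
Qed.

Lemma ulimX_unique (nu : ultrafilter X) p : conv nu p -> ulimX nu = p.
Proof. intros hp; exact (hausdorff_conv_unique X X_hausdorff nu _ _ (ulimX_conv nu) hp). Qed.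

Lemma ulim_id_of_conv (nu : ultrafilter X) p : conv nu p -> p = ulim (fun y => y) nu.
Proof. intros h; symmetry; apply ulimX_unique; exact h. Qed.

Lemma ulim_principal {S} (x : S -> X) s0 : x s0 = ulim x (principal s0).
Proof. symmetry; apply ulimX_unique; intros W _ h; exact h. Qed.

End CompactHausdorff.

(* Barr: a convergence relation satisfying the principal and the diagonal axioms is the
   convergence of the topology it generates. *)
Section Barr.
Context {T : Type} (cv : ultrafilter T -> T -> Prop).
Hypothesis cv_principal : forall t, cv (principal t) t.
Hypothesis cv_diagonal : forall (S : Type) (z : ultrafilter S) (th : S -> ultrafilter T) (g : S -> T) (h : T),
    (forall s, cv (th s) (g s)) -> cv (push g z) h -> cv (uint z th) h.

Definition cv_open (W : T -> Prop) := forall f, W f -> forall eta, cv eta f -> eta W.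

Definition cv_closure (C : T -> Prop) (h : T) := exists xi : ultrafilter T, xi C /\ cv xi h.

Lemma push_id (eta : ultrafilter T) : push (fun t => t) eta = eta.
Proof. apply uf_ext; intros A; simpl; tauto. Qed.

Lemma cv_closure_compl_open (C : T -> Prop) : cv_open (fun h => ~ cv_closure C h).
Proof.
  intros h hh eta hc. apply NNPP; intros hn.
  assert (hcl : eta (cv_closure C)).
  { apply (uf_mono eta _ _ (uf_compl eta _ hn)); intros t ht; apply NNPP; exact ht. }
  set (th := fun g => match excluded_middle_informative (cv_closure C g) with
                      | left H => proj1_sig (constructive_indefinite_description _ H)
                      | right _ => principal g end).
  assert (hth : forall g, cv (th g) g).
  { intros g; unfold th; destruct (excluded_middle_informative (cv_closure C g)) as [H|H];
      [|apply cv_principal].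
    destruct (constructive_indefinite_description _ H) as [xi [hx0 hx]]; exact hx. }
  assert (hpush : cv (push (fun t => t) eta) h) by (rewrite push_id; exact hc).
  apply hh. exists (uint eta th); split; [|exact (cv_diagonal T eta th (fun t => t) h hth hpush)].
  simpl. apply (uf_mono eta _ _ hcl); intros g hg; unfold th.
  destruct (excluded_middle_informative (cv_closure C g)) as [H|H]; [|contradiction].
  destruct (constructive_indefinite_description _ H) as [xi [hx hx0]]; exact hx.
Qed.

(* If [f] were in the closure of every member of [eta], choosing for each member [C] an
   ultrafilter on [C] converging to [f] and integrating them gives back [eta]. *)
Lemma cv_closure_all_conv (eta : ultrafilter T) (f : T) :
  (forall C, eta C -> cv_closure C f) -> cv eta f.
Proof.
  intros hall.
  set (I := {C : T -> Prop | eta C}).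
  destruct (ultrafilter_extends_base
              (fun A : I -> Prop => exists D, eta D /\ A = (fun c => forall t, proj1_sig c t -> D t)))
    as [z hz].
  - exists (fun c : I => forall t, proj1_sig c t -> True), (fun _ => True); split; [apply uf_T|reflexivity].
  - intros A B [D [hD ->]] [D' [hD' ->]].
    exists (fun c : I => forall t, proj1_sig c t -> D t /\ D' t); split.
    + exists (fun t => D t /\ D' t); split; [apply uf_I; auto|reflexivity].
    + intros c hc; split; intros t ht; apply (hc t ht).
  - intros A [D [hD ->]]. exists (exist _ D hD); simpl; auto.
  - set (th := fun c : I => proj1_sig (constructive_indefinite_description _ (hall (proj1_sig c) (proj2_sig c)))).
    assert (hth : forall c, th c (proj1_sig c) /\ cv (th c) f).
    { intros c; unfold th; destruct (constructive_indefinite_description _ _) as [xi h]; exact h. }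
    assert (hp : cv (push (fun _ => f) z) f).
    { replace (push (fun _ => f) z) with (principal f); [apply cv_principal|].
      apply uf_ext; intros A; simpl; split.
      - intros hA; apply uf_all; auto.
      - intros hA; apply NNPP; intros hnA; apply (uf_0 z); apply (uf_mono z _ _ hA); auto. }
    replace eta with (uint z th); [exact (cv_diagonal I z th (fun _ => f) f (fun c => proj2 (hth c)) hp)|].
    apply uf_ext; intros A; split.
    + intros hA; apply NNPP; intros hnA.
      assert (hz2 : z (fun c => forall t, proj1_sig c t -> ~ A t))
        by (apply hz; exists (fun t => ~ A t); split; [apply uf_compl; exact hnA|reflexivity]).
      apply (uf_0 z). apply (uf_mono z _ _ (uf_I z _ _ hA hz2)). intros c [h1 h2].
      apply (uf_not_compl (th c) A h1). apply (uf_mono (th c) _ _ (proj1 (hth c))). exact h2.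
    + intros hA. simpl. assert (hz2 : z (fun c => forall t, proj1_sig c t -> A t)) by (apply hz; exists A; auto).
      apply (uf_mono z _ _ hz2). intros c hc. apply (uf_mono (th c) _ _ (proj1 (hth c))). exact hc.
Qed.

Lemma barr_conv (eta : ultrafilter T) (f : T) :
  (forall W, cv_open W -> W f -> eta W) -> cv eta f.
Proof.
  intros H; apply cv_closure_all_conv; intros C hC; apply NNPP; intros hn.
  apply (uf_not_compl eta (cv_closure C)).
  - apply (uf_mono eta _ _ hC); intros t ht; exists (principal t); split; [exact ht|apply cv_principal].
  - exact (H _ (cv_closure_compl_open C) hn).
Qed.

End Barr.

(** * Distance in ultraproducts *)

Section UltraproductDistance.
Context {S : Type} (mu : ultrafilter S) {M : S -> Type} (D : forall s, M s -> M s -> R) (K : R).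
Hypothesis D_bounded : forall s u v, 0 <= D s u v <= K.

Definition up_dist_at (a b : UP mu M) (s : S) : R :=
  match proj1_sig a s, proj1_sig b s with Some u, Some v => D s u v | _, _ => 0 end.

Lemma up_dist_at_bounded a b s : Rabs (up_dist_at a b s) <= Rabs K.
Proof.
  unfold up_dist_at; destruct (proj1_sig a s) as [u|], (proj1_sig b s) as [v|];
    try (rewrite Rabs_R0; apply Rabs_pos).
  pose proof (D_bounded s u v). rewrite (Rabs_pos_eq (D s u v)) by lra. pose proof (Rle_abs K); lra.
Qed.

Lemma up_dist_le (a b : UP mu M) eps :
  mu (fun s => forall u v, proj1_sig a s = Some u -> proj1_sig b s = Some v -> D s u v <= eps) ->
  up_dist mu D a b <= eps.
Proof.
  intros h; apply (ulimR_le mu (up_dist_at a b) (Rabs K) (up_dist_at_bounded a b)).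
  apply (uf_mono mu _ _ (uf_I mu _ _ h (uf_I mu _ _ (proj2_sig a) (proj2_sig b)))).
  intros s [h1 [h2 h3]]; unfold up_dist_at.
  destruct (proj1_sig a s) as [u|]; [|contradiction]; destruct (proj1_sig b s) as [v|]; [|contradiction].
  apply h1; reflexivity.
Qed.

Lemma up_dist_nonneg (a b : UP mu M) : 0 <= up_dist mu D a b.
Proof.
  apply (ulimR_ge mu (up_dist_at a b) (Rabs K) (up_dist_at_bounded a b)).
  apply uf_all; intros s; unfold up_dist_at.
  destruct (proj1_sig a s) as [u|], (proj1_sig b s) as [v|]; try lra. apply D_bounded.
Qed.

Lemma up_dist_bounded (a b : UP mu M) : 0 <= up_dist mu D a b <= K.
Proof.
  split; [apply up_dist_nonneg|].
  apply (ulimR_le mu (up_dist_at a b) (Rabs K) (up_dist_at_bounded a b)).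
  apply (uf_mono mu _ _ (proj2_sig a)); intros s h; unfold up_dist_at.
  destruct (proj1_sig a s) as [u|]; [|contradiction].
  pose proof (D_bounded s u u).
  destruct (proj1_sig b s) as [v|]; [apply D_bounded|lra].
Qed.

Lemma up_dist_lt (a b : UP mu M) eps : up_dist mu D a b < eps ->
  mu (fun s => exists u v, proj1_sig a s = Some u /\ proj1_sig b s = Some v /\ D s u v < eps).
Proof.
  intros h; pose proof (ulimR_lt mu (up_dist_at a b) (Rabs K) (up_dist_at_bounded a b) eps h) as h'.
  apply (uf_mono mu _ _ (uf_I mu _ _ h' (uf_I mu _ _ (proj2_sig a) (proj2_sig b)))).
  intros s [h1 [h2 h3]]; unfold up_dist_at in h1.
  destruct (proj1_sig a s) as [u|]; [|contradiction]; destruct (proj1_sig b s) as [v|]; [|contradiction].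
  exists u, v; auto.
Qed.

Lemma up_dist_eq0 (a b : UP mu M) :
  (forall eps, 0 < eps -> mu (fun s => forall u v, proj1_sig a s = Some u -> proj1_sig b s = Some v ->
                                        D s u v <= eps)) ->
  up_dist mu D a b = 0.
Proof.
  intros h; apply Rle_antisym; [|apply up_dist_nonneg].
  apply Rle_plus_epsilon; intros eps he; rewrite Rplus_0_l; apply up_dist_le; auto.
Qed.

End UltraproductDistance.

Lemma Delta_val {S T : Type} {mu : ultrafilter S} {nu : S -> ultrafilter T} {M : T -> Type}
  (a : UP (uint mu nu) M) s u : proj1_sig (Defs.Delta a) s = Some u -> proj1_sig u = proj1_sig a.
Proof.
  unfold Defs.Delta; simpl. destruct (excluded_middle_informative _) as [h|h]; [|discriminate].
  intros hh; injection hh as <-; reflexivity.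
Qed.

(** * The left ultrafunctor of a bundle *)

Lemma fib_ext {X : Space} (E : BunData X) y (u v : fib E y) : proj1_sig u = proj1_sig v -> u = v.
Proof.
  destruct u as [u hu], v as [v hv]; simpl; intros ->; f_equal; apply proof_irrelevance.
Qed.

Lemma fib_cast {X : Space} (E : BunData X) y z (e : y = z) (a : fib E y) :
  proj1_sig (eq_rect _ (fib E) a _ e) = proj1_sig a.
Proof. destruct e; reflexivity. Qed.

Lemma fib_proj {X : Space} {E : BunData X} {y} (z : fib E y) : proj E (proj1_sig z) = y.
Proof. exact (proj2_sig z). Qed.

Section BundleSide.
Variable X : Space.
Hypothesis X_compact : compact_space X.
Variable k : R.
Variable E : BunData X.
Hypothesis E_bundle : is_Bundle k E.

Let E_metric := proj1 E_bundle.
Let E_usc := proj1 (proj2 E_bundle).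
Let E_proj_open := proj1 (proj2 (proj2 (proj2 E_bundle))).
Let E_uniform_nbhd := proj2 (proj2 (proj2 (proj2 E_bundle))).

Lemma fdist_bounded y (u v : fib E y) : 0 <= fdist E y u v <= k.
Proof. apply (proj1 (E_metric y)). Qed.

Lemma bd_bounded (e f : tot E) : proj E e = proj E f -> 0 <= bd E e f <= k.
Proof. intros h; exact (fdist_bounded (proj E f) (exist _ e h) (exist _ f eq_refl)). Qed.

Lemma bd_refl (e : tot E) : bd E e e = 0.
Proof.
  exact (proj2 (proj1 (proj2 (E_metric (proj E e))) (exist _ e eq_refl) (exist _ e eq_refl)) eq_refl).
Qed.

Lemma bd_sym (e f : tot E) : proj E e = proj E f -> bd E e f = bd E f e.
Proof.
  intros h; exact (proj1 (proj2 (proj2 (E_metric (proj E f)))) (exist _ e h) (exist _ f eq_refl)).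
Qed.

Lemma bd_tri (e f g : tot E) : proj E e = proj E f -> proj E f = proj E g ->
  bd E e g <= bd E e f + bd E f g.
Proof.
  intros h1 h2.
  exact (proj1 (proj2 (proj2 (proj2 (E_metric (proj E g)))))
           (exist _ e (eq_trans h1 h2)) (exist _ f h2) (exist _ g eq_refl)).
Qed.

Lemma bd_eq0 (e f : tot E) : proj E e = proj E f -> bd E e f = 0 -> e = f.
Proof.
  intros h h0.
  exact (f_equal (@proj1_sig _ _)
           (proj1 (proj1 (proj2 (E_metric (proj E f))) (exist _ e h) (exist _ f eq_refl)) h0)).
Qed.

Lemma bd_small_nbhds (e : tot E) r : 0 < r ->
  exists U V, opn U /\ opn V /\ U e /\ V e /\
    forall e' f', U e' -> V f' -> proj E e' = proj E f' -> bd E e' f' < r.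
Proof. intros hr; apply E_usc; [reflexivity|rewrite bd_refl; exact hr]. Qed.

Definition fibre_diam_lt (H : tot E -> Prop) (r : R) : Prop :=
  forall e g, H e -> H g -> proj E e = proj E g -> bd E e g < r.

Lemma shrinking_nbhds (f0 : tot E) : exists G : nat -> tot E -> Prop,
  (forall n, opn (G n)) /\ (forall n, G n f0) /\
  (forall m n e, (n <= m)%nat -> G m e -> G n e) /\
  (forall n, fibre_diam_lt (G n) (/ INR (S n))).
Proof.
  set (Hprop := fun (n : nat) (H : tot E -> Prop) => opn H /\ H f0 /\ fibre_diam_lt H (/ INR (S n))).
  assert (hHex : forall n, exists H, Hprop n H).
  { intros n. destruct (bd_small_nbhds f0 _ (inv_INR_S_pos n)) as [U [V [hU [hV [hUf [hVf hUV]]]]]].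
    exists (fun e => U e /\ V e); split; [apply opn_inter; auto|split; [auto|]].
    intros e g [a _] [_ b] h; apply hUV; auto. }
  set (Hs := fun n => epsilon (inhabits (fun _ : tot E => True)) (Hprop n)).
  assert (hHs : forall n, Hprop n (Hs n)) by (intros n; apply epsilon_spec; apply hHex).
  exists (fun n e => forall m, (m <= n)%nat -> Hs m e).
  split; [|split; [|split]].
  - induction n as [|n IH].
    + apply (opn_ext _ (Hs 0%nat)); [|apply (hHs 0%nat)].
      intros e; split; [intros h m hm; replace m with 0%nat by lia; exact h|intros h; apply h; lia].
    + apply (opn_ext _ (fun e => (forall m, (m <= n)%nat -> Hs m e) /\ Hs (S n) e));
        [|apply opn_inter; [exact IH|apply (hHs (S n))]].
      intros e; split.
      * intros [h1 h2] m hm; destruct (Nat.eq_dec m (S n)) as [->|hne]; [exact h2|apply h1; lia].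
      * intros h; split; [intros m hm; apply h; lia|apply h; lia].
  - intros n m _; apply (hHs m).
  - intros m n e hnm h j hj; apply h; lia.
  - intros n e g he hg hp; apply (proj2 (proj2 (hHs n))); [apply he|apply hg|exact hp]; lia.
Qed.

Section ShrinkingNbhds.
Variable G : nat -> tot E -> Prop.
Hypothesis G_mono : forall m n e, (n <= m)%nat -> G m e -> G n e.
Hypothesis G_diam : forall n, fibre_diam_lt (G n) (/ INR (S n)).

Definition meets (n : nat) (y : X) : Prop := exists h, G n h /\ proj E h = y.

Definition near_all_levels (y : X) (z : fib E y) : Prop :=
  forall n g, G n g -> proj E g = y -> meets n y -> bd E (proj1_sig z) g <= / INR (S n).

Lemma meets_mono m n y : (n <= m)%nat -> meets m y -> meets n y.
Proof. intros hnm [h [hh hp]]; exists h; split; [apply (G_mono m); auto|auto]. Qed.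

Lemma near_all_levels_of_limit y : (forall n, meets n y) -> exists z, near_all_levels y z.
Proof.
  intros hall.
  set (u := fun m => exist (fun e => proj E e = y)
                       (proj1_sig (constructive_indefinite_description _ (hall m)))
                       (proj2 (proj2_sig (constructive_indefinite_description _ (hall m))))).
  assert (hu : forall m, G m (proj1_sig (u m))).
  { intros m; exact (proj1 (proj2_sig (constructive_indefinite_description _ (hall m)))). }
  assert (hcau : forall eps, 0 < eps -> exists N, forall m n, (N <= m)%nat -> (N <= n)%nat ->
                   fdist E y (u m) (u n) < eps).
  { intros eps he; destruct (inv_INR_S_lt eps he) as [N hN]; exists N; intros m n hm hn.
    eapply Rlt_trans; [|exact hN]. unfold fdist.
    apply G_diam; [apply (G_mono m); auto|apply (G_mono n); auto|].
    rewrite (fib_proj (u m)), (fib_proj (u n)); reflexivity. }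
  destruct (proj2 (proj2 (proj2 (proj2 (E_metric y)))) u hcau) as [l hl].
  exists l; intros n g hg hgy _.
  apply Rle_plus_epsilon; intros eps he.
  destruct (hl eps he) as [N hN].
  set (m := Nat.max N n).
  assert (h1 : fdist E y (u m) l < eps) by (apply hN; lia).
  assert (h2 : bd E (proj1_sig (u m)) g < / INR (S n)).
  { apply G_diam; [apply (G_mono m); [lia|apply hu]|exact hg|rewrite (fib_proj (u m)); auto]. }
  unfold fdist in h1.
  assert (hp1 : proj E (proj1_sig l) = proj E (proj1_sig (u m)))
    by (rewrite (fib_proj l), (fib_proj (u m)); reflexivity).
  assert (hp2 : proj E (proj1_sig (u m)) = proj E g) by (rewrite (fib_proj (u m)); auto).
  pose proof (bd_tri _ _ _ hp1 hp2) as ht. rewrite (bd_sym _ _ hp1) in ht. lra.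
Qed.

Lemma near_all_levels_of_last y n : meets n y -> ~ meets (S n) y -> exists z, near_all_levels y z.
Proof.
  intros [h [hh hp]] hlast.
  exists (exist (fun e => proj E e = y) h hp); intros m g hg hgy hm; simpl.
  assert (hle : (m <= n)%nat).
  { destruct (Nat.le_gt_cases m n) as [hle|hlt]; [exact hle|exfalso; apply hlast].
    apply (meets_mono m); [lia|exact hm]. }
  apply Rlt_le; apply (G_diam m); [apply (G_mono n); auto|exact hg|rewrite hp; auto].
Qed.

Lemma near_all_levels_exists y : meets 0 y -> exists z, near_all_levels y z.
Proof.
  intros h0. destruct (classic (forall n, meets n y)) as [hall|hn].
  - exact (near_all_levels_of_limit y hall).
  - assert (hlast : exists n, meets n y /\ ~ meets (S n) y).
    { apply NNPP; intros hno. apply hn. intros n; induction n as [|n IH]; [exact h0|].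
      apply NNPP; intros hs; apply hno; exists n; auto. }
    destruct hlast as [n [hn1 hn2]]; exact (near_all_levels_of_last y n hn1 hn2).
Qed.

End ShrinkingNbhds.

Definition AW_limit (nu : ultrafilter X) (f : fib E (ulimX nu)) (a : UP nu (fib E)) : Prop :=
  forall eps, 0 < eps -> exists W, opn W /\ W (proj1_sig f) /\
        forall b, A_W E nu W b -> up_dist nu (fdist E) a b < eps.

(* Choosing in every fibre a point close to all small neighbourhoods of [f] at once
   gives the limit of the filter generated by the [A_W]. *)
Lemma AW_limit_exists (nu : ultrafilter X) (f : fib E (ulimX nu)) : exists a, AW_limit nu f a.
Proof.
  destruct (shrinking_nbhds (proj1_sig f)) as [G [hGopn [hGf [hGmono hGdiam]]]].
  assert (hmeets : forall n, nu (meets G n)).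
  { intros n; apply (ulimX_conv X X_compact nu); [apply E_proj_open; apply hGopn|].
    exists (proj1_sig f); split; [apply hGf|exact (fib_proj f)]. }
  set (bval := fun y => match excluded_middle_informative (meets G 0 y) with
                 | left h0 => Some (proj1_sig (constructive_indefinite_description _
                                 (near_all_levels_exists G hGmono hGdiam y h0)))
                 | right _ => None end).
  assert (hbUP : nu (fun y => bval y <> None)).
  { apply (uf_mono nu _ _ (hmeets 0%nat)); intros y h; unfold bval.
    destruct (excluded_middle_informative (meets G 0 y)); [discriminate|contradiction]. }
  exists (exist _ bval hbUP).
  intros eps he. destruct (inv_INR_S_lt (eps / 2)) as [n hn]; [lra|].
  exists (G n); split; [apply hGopn|split; [apply hGf|]].
  intros b [U [hU [eps' [he' hUb]]]].
  apply Rle_lt_trans with (/ INR (S n)); [|lra].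
  apply (up_dist_le nu (fdist E) k fdist_bounded).
  apply (uf_mono nu _ _ (uf_I nu _ _ hU (hmeets n))). intros y [hyU hyP] u v hu hv.
  destruct (hUb y hyU) as [z [hz hzW]].
  rewrite hz in hv; injection hv as <-.
  simpl in hu; unfold bval in hu.
  destruct (excluded_middle_informative (meets G 0 y)) as [h0|h0]; [|discriminate].
  injection hu as <-.
  destruct (constructive_indefinite_description _ _) as [w hw]; simpl.
  unfold fdist; apply hw; [|apply (fib_proj z)|exact hyP].
  apply hzW. unfold fdist; rewrite bd_refl; exact he'.
Qed.

Lemma sigX_AW_limit (nu : ultrafilter X) (f : fib E (ulimX nu)) : AW_limit nu f (sigX E nu f).
Proof.
  unfold sigX. apply (epsilon_spec (UP_fib_inh E nu) (AW_limit nu f)). apply AW_limit_exists.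
Qed.

Lemma section_through_open (nu : ultrafilter X) (V : tot E -> Prop) (f0 : tot E) :
  opn V -> V f0 -> conv nu (proj E f0) ->
  exists b : UP nu (fib E), nu (fun y => exists z, proj1_sig b y = Some z /\ V (proj1_sig z)).
Proof.
  intros hV hVf hc.
  set (Q := fun y => exists h, V h /\ proj E h = y).
  assert (hQ : nu Q) by (apply hc; [apply E_proj_open; exact hV|exists f0; auto]).
  set (bval := fun y => match excluded_middle_informative (Q y) with
                 | left H => let (h, hp) := constructive_indefinite_description _ H in
                             Some (exist (fun e => proj E e = y) h (proj2 hp))
                 | right _ => None end).
  assert (hbval : forall y, Q y -> exists z, bval y = Some z /\ V (proj1_sig z)).
  { intros y hy; unfold bval; destruct (excluded_middle_informative (Q y)); [|contradiction].
    destruct (constructive_indefinite_description _ _) as [h [hh hp]]; eexists; split; [reflexivity|exact hh]. }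
  assert (hbUP : nu (fun y => bval y <> None)).
  { apply (uf_mono nu _ _ hQ); intros y hy; destruct (hbval y hy) as [z [-> _]]; discriminate. }
  exists (exist _ bval hbUP); exact (uf_mono nu _ _ hQ hbval).
Qed.

(* Property (3) of bundles lets one pass from an [A_W]-set to actual membership in [W]. *)
Lemma sigX_eventually_in (nu : ultrafilter X) (f : fib E (ulimX nu)) (W : tot E -> Prop) :
  opn W -> W (proj1_sig f) ->
  nu (fun y => exists z, proj1_sig (sigX E nu f) y = Some z /\ W (proj1_sig z)).
Proof.
  intros hW hWf.
  destruct (E_uniform_nbhd W hW _ hWf) as [V [dl [hV [hVf [hdl [_ hVW]]]]]].
  destruct (sigX_AW_limit nu f dl hdl) as [W1 [hW1 [hW1f hA]]].
  destruct (E_uniform_nbhd (fun e => W1 e /\ V e)) with (f := proj1_sig f)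
    as [V2 [dl2 [hV2 [hV2f [hdl2 [_ hV2W]]]]]]; [apply opn_inter; auto|split; auto|].
  assert (hV2sub : forall e, V2 e -> W1 e /\ V e).
  { intros e he; apply hV2W; exists e; split; [auto|split; [auto|rewrite bd_refl; exact hdl2]]. }
  destruct (section_through_open nu V2 (proj1_sig f) hV2 hV2f)
    as [b hb]; [rewrite (fib_proj f); apply ulimX_conv; exact X_compact|].
  assert (hbA : A_W E nu W1 b).
  { exists (fun y => exists z, proj1_sig b y = Some z /\ V2 (proj1_sig z)); split; [exact hb|].
    exists dl2; split; [exact hdl2|].
    intros y [z [hz hzV]]; exists z; split; [exact hz|].
    intros g hg.
    assert (hpz : proj E (proj1_sig g) = proj E (proj1_sig z))
      by (rewrite (fib_proj g), (fib_proj z); reflexivity).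
    apply hV2W; exists (proj1_sig z); split; [exact hzV|split; [exact hpz|]].
    unfold fdist in hg; rewrite (bd_sym _ _ hpz); exact hg. }
  pose proof (up_dist_lt nu (fdist E) k fdist_bounded _ _ _ (hA b hbA)) as hlt.
  apply (uf_mono nu _ _ (uf_I nu _ _ hlt hb)). intros y [[u [v [hu [hv hd]]]] [z [hz hzV]]].
  exists u; split; [exact hu|]. apply hVW. exists (proj1_sig v).
  rewrite hv in hz; injection hz as ->.
  split; [exact (proj2 (hV2sub _ hzV))|split; [rewrite (fib_proj u), (fib_proj z); reflexivity|exact hd]].
Qed.

Lemma Rsig_eventually_in {S} (M : S -> X) (mu : ultrafilter S) (f : fib E (ulim M mu))
  (W : tot E -> Prop) : opn W -> W (proj1_sig f) ->
  mu (fun s => exists z, proj1_sig (Rsig E S M mu f) s = Some z /\ W (proj1_sig z)).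
Proof. exact (sigX_eventually_in (push M mu) f W). Qed.

Lemma Rsig_lipschitz S (x : S -> X) (mu : ultrafilter S) (a b : fib E (ulim x mu)) :
  up_dist mu (fun s => fdist E (x s)) (Rsig E S x mu a) (Rsig E S x mu b) <= fdist E _ a b.
Proof.
  apply Rle_plus_epsilon; intros eps he.
  destruct (E_usc (proj1_sig a) (proj1_sig b)) with (r := fdist E _ a b + eps)
    as [U [V [hU [hV [hUa [hVb hUV]]]]]];
    [rewrite (fib_proj a), (fib_proj b); reflexivity|unfold fdist; lra|].
  apply (up_dist_le mu (fun s => fdist E (x s)) k (fun s => fdist_bounded (x s))).
  apply (uf_mono mu _ _ (uf_I mu _ _ (Rsig_eventually_in x mu a U hU hUa)
                                     (Rsig_eventually_in x mu b V hV hVb))).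
  intros s [[z [hz hzU]] [w [hw hwV]]] u v hu hv.
  rewrite hz in hu; injection hu as <-. rewrite hw in hv; injection hv as <-.
  apply Rlt_le; apply hUV; auto. rewrite (fib_proj z), (fib_proj w); reflexivity.
Qed.

Lemma Rsig_principal S (x : S -> X) (s0 : S) (e : ulim x (principal s0) = x s0)
  (a : fib E (ulim x (principal s0))) :
  proj1_sig (Rsig E S x (principal s0) a) s0 = Some (eq_rect _ (fib E) a _ e).
Proof.
  change (proj1_sig (sigX E (push x (principal s0)) a) (x s0) = Some (eq_rect _ (fib E) a _ e)).
  set (b := sigX E (push x (principal s0)) a).
  assert (hb : proj1_sig b (x s0) <> None) by exact (proj2_sig b).
  destruct (proj1_sig b (x s0)) as [z|] eqn:Hz; [|contradiction].
  f_equal. apply fib_ext. rewrite fib_cast.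
  assert (hp : proj E (proj1_sig z) = proj E (proj1_sig a))
    by (rewrite (fib_proj z), (fib_proj a); symmetry; exact e).
  apply bd_eq0; [exact hp|].
  apply Rle_antisym; [|apply (bd_bounded _ _ hp)].
  apply Rle_plus_epsilon; intros eps he; rewrite Rplus_0_l.
  destruct (bd_small_nbhds (proj1_sig a) eps he) as [U [V [hU [hV [hUa [hVa hUV]]]]]].
  destruct (sigX_eventually_in (push x (principal s0)) a (fun e => U e /\ V e)
              (opn_inter _ _ _ hU hV) (conj hUa hVa)) as [z' [hz' [hU' _]]].
  change (proj1_sig b (x s0) = Some z') in hz'. rewrite Hz in hz'; injection hz' as <-.
  apply Rlt_le; apply hUV; auto.
Qed.

Lemma Rsig_assoc S T (mu : ultrafilter S) (nu : S -> ultrafilter T) (x : T -> X)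
  (e : ulim (fun s => ulim x (nu s)) mu = ulim x (uint mu nu))
  (a : fib E (ulim (fun s => ulim x (nu s)) mu)) :
  up_dist mu (fun s => up_dist (nu s) (fun t => fdist E (x t)))
    (Defs.Delta (Rsig E T x (uint mu nu) (eq_rect _ (fib E) a _ e)))
    (upmap (fun s => Rsig E T x (nu s)) (Rsig E S (fun s => ulim x (nu s)) mu a)) = 0.
Proof.
  apply (up_dist_eq0 mu _ k); [intros s u v; apply (up_dist_bounded _ _ k (fun t => fdist_bounded (x t)))|].
  intros eps he.
  destruct (bd_small_nbhds (proj1_sig a) eps he) as [U [V [hU [hV [hUa [hVa hUV]]]]]].
  set (a' := eq_rect _ (fib E) a _ e).
  assert (hUa' : U (proj1_sig a')) by (unfold a'; rewrite fib_cast; exact hUa).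
  pose proof (Rsig_eventually_in x (uint mu nu) a' U hU hUa') as h1.
  pose proof (Rsig_eventually_in (fun s => ulim x (nu s)) mu a V hV hVa) as h2.
  apply (uf_mono mu _ _ (uf_I mu _ _ h1 h2)). intros s [hs1 [w [hw hwV]]] u v hu hv.
  pose proof (Delta_val _ _ _ hu) as hu'.
  simpl in hv, hw; rewrite hw in hv; injection hv as <-.
  apply (up_dist_le (nu s) (fun t => fdist E (x t)) k (fun t => fdist_bounded (x t))).
  apply (uf_mono (nu s) _ _ (uf_I (nu s) _ _ hs1 (Rsig_eventually_in x (nu s) w V hV hwV))).
  intros t [[z [hz hzU]] [z' [hz' hz'V]]] u1 v1 hu1 hv1.
  rewrite hu' in hu1. simpl in hu1, hz. rewrite hz in hu1; injection hu1 as <-.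
  rewrite hz' in hv1; injection hv1 as <-.
  apply Rlt_le; apply hUV; auto. rewrite (fib_proj z), (fib_proj z'); reflexivity.
Qed.

Lemma R_obj_LeftUlt : is_LeftUlt k (R_obj E).
Proof.
  split; [exact E_metric|split; [exact Rsig_lipschitz|split; [exact Rsig_principal|exact Rsig_assoc]]].
Qed.

End BundleSide.

Lemma R_mor_LUmor (X : Space) (X_compact : compact_space X) (k : R) (E E' : BunData X)
  (psi : tot E -> tot E') (h : over E E' psi) :
  is_Bundle k E -> is_Bundle k E' -> is_Bmor E E' psi ->
  is_LUmor (R_obj E) (R_obj E') (R_mor h).
Proof.
  intros hE hE' [_ [hpc hpl]]. split.
  - intros x a b; simpl; unfold fdist, R_mor; simpl. apply hpl. rewrite (fib_proj a), (fib_proj b); reflexivity.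
  - intros S x mu a.
    change (up_dist mu (fun s => fdist E' (x s)) (Rsig E' S x mu (R_mor h _ a))
              (upmap (fun s => R_mor h (x s)) (Rsig E S x mu a)) = 0).
    apply (up_dist_eq0 mu _ k (fun s => fdist_bounded X k E' hE' (x s))).
    intros eps he.
    destruct (bd_small_nbhds X k E' hE' (psi (proj1_sig a)) eps he) as [U [V [hU [hV [hUa [hVa hUV]]]]]].
    pose proof (Rsig_eventually_in X X_compact k E' hE' x mu (R_mor h _ a) U hU hUa) as h1.
    pose proof (Rsig_eventually_in X X_compact k E hE x mu a (fun e => V (psi e)) (hpc V hV) hVa) as h2.
    apply (uf_mono mu _ _ (uf_I mu _ _ h1 h2)). intros s [[z [hz hzU]] [w [hw hwV]]] u v hu hv.
    rewrite hz in hu; injection hu as <-.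
    simpl in hv, hw; rewrite hw in hv; injection hv as <-.
    apply Rlt_le; apply hUV; [exact hzU|exact hwV|].
    unfold R_mor; simpl. rewrite h, (fib_proj z), (fib_proj w); reflexivity.
Qed.

Lemma R_mor_id (X : Space) (E : BunData X) (h : over E E (fun e => e)) x (a : fib E x) :
  R_mor h x a = a.
Proof. apply fib_ext; reflexivity. Qed.

Lemma R_mor_comp (X : Space) (E E' E'' : BunData X) (psi : tot E -> tot E') (psi' : tot E' -> tot E'')
  (h : over E E' psi) (h' : over E' E'' psi') (h'' : over E E'' (fun e => psi' (psi e))) x (a : fib E x) :
  R_mor h'' x a = R_mor h' x (R_mor h x a).
Proof. apply fib_ext; reflexivity. Qed.

(** * The bundle of a left ultrafunctor *)

Lemma is_kmet_transfer (k : R) {A B : Type} (dA : A -> A -> R) (dB : B -> B -> R)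
  (phi : A -> B) (psi : B -> A) :
  is_kmet k dB -> (forall a b, dA a b = dB (phi a) (phi b)) -> (forall c, phi (psi c) = c) ->
  (forall a, psi (phi a) = a) -> is_kmet k dA.
Proof.
  intros [h1 [h2 [h3 [h4 h5]]]] hd hpp hpp'.
  split; [intros a b; rewrite hd; apply h1|split; [|split; [|split]]].
  - intros a b; rewrite hd; split; [intros h; rewrite <- (hpp' a), <- (hpp' b); f_equal; apply h2; exact h|].
    intros ->; apply h2; reflexivity.
  - intros a b; rewrite !hd; apply h3.
  - intros a b c; rewrite !hd; apply h4.
  - intros u hu. destruct (h5 (fun n => phi (u n))) as [l hl].
    + intros eps he; destruct (hu eps he) as [N hN]; exists N; intros m n hm hn; rewrite <- hd; auto.
    + exists (psi l); intros eps he; destruct (hl eps he) as [N hN]; exists N; intros n hn; rewrite hd, hpp; auto.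
Qed.

Definition lu_cast {X : Space} (F : LUdata X) {x y : X} (e : x = y) (a : lu_car F x) : lu_car F y :=
  eq_rect x (lu_car F) a y e.

(* [sigma_mu] at a point [p] that is only propositionally equal to the limit of [x] along [mu] *)
Definition lu_sig_at {X : Space} (F : LUdata X) {S} (x : S -> X) (mu : ultrafilter S) (p : X)
  (e : p = ulim x mu) (a : lu_car F p) : UP mu (fun s => lu_car F (x s)) :=
  lu_sig F S x mu (lu_cast F e a).

Lemma lu_cast_id {X : Space} (F : LUdata X) {x : X} (e : x = x) a : lu_cast F e a = a.
Proof. rewrite (proof_irrelevance _ e eq_refl); reflexivity. Qed.

Lemma lu_sig_at_irr {X : Space} (F : LUdata X) {S} (x : S -> X) mu p (e1 e2 : p = ulim x mu) a :
  lu_sig_at F x mu p e1 a = lu_sig_at F x mu p e2 a.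
Proof. rewrite (proof_irrelevance _ e1 e2); reflexivity. Qed.

Section LeftUltSide.
Variable X : Space.
Hypothesis X_compact : compact_space X.
Hypothesis X_hausdorff : hausdorff_space X.
Variable k : R.
Variable F : LUdata X.
Hypothesis F_LeftUlt : is_LeftUlt k F.

Lemma lu_d_bounded x (a b : lu_car F x) : 0 <= lu_d F x a b <= k.
Proof. apply (proj1 (proj1 F_LeftUlt x)). Qed.
Lemma lu_d_refl x (a : lu_car F x) : lu_d F x a a = 0.
Proof. apply (proj1 (proj2 (proj1 F_LeftUlt x))); reflexivity. Qed.
Lemma lu_d_sym x (a b : lu_car F x) : lu_d F x a b = lu_d F x b a.
Proof. apply (proj1 (proj2 (proj2 (proj1 F_LeftUlt x)))). Qed.
Lemma lu_d_tri x (a b c : lu_car F x) : lu_d F x a c <= lu_d F x a b + lu_d F x b c.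
Proof. apply (proj1 (proj2 (proj2 (proj2 (proj1 F_LeftUlt x))))). Qed.

Lemma up_dist_lu_bounded {T} (nu : ultrafilter T) (x : T -> X) (u v : UP nu (fun t => lu_car F (x t))) :
  0 <= up_dist nu (fun t => lu_d F (x t)) u v <= k.
Proof. exact (up_dist_bounded _ _ k (fun t => lu_d_bounded (x t)) u v). Qed.

Lemma lu_sig_at_lipschitz {S} (x : S -> X) mu p (e : p = ulim x mu) a b :
  up_dist mu (fun s => lu_d F (x s)) (lu_sig_at F x mu p e a) (lu_sig_at F x mu p e b) <= lu_d F p a b.
Proof. subst p; apply (proj1 (proj2 F_LeftUlt)). Qed.

Lemma lu_sig_at_principal {S} (x : S -> X) s0 p (e : p = ulim x (principal s0)) (e' : p = x s0) a :
  proj1_sig (lu_sig_at F x (principal s0) p e a) s0 = Some (lu_cast F e' a).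
Proof. subst p. exact (proj1 (proj2 (proj2 F_LeftUlt)) S x s0 e' a). Qed.

(* Axiom (ii), read componentwise. *)
Lemma lu_sig_at_assoc_ev {S T} (mu : ultrafilter S) (nu : S -> ultrafilter T) (x : T -> X)
  (ys : S -> X) (hy : forall s, ys s = ulim x (nu s))
  (rho : ultrafilter T) (hrho : forall A, rho A <-> mu (fun s => nu s A))
  (p : X) (e1 : p = ulim ys mu) (e2 : p = ulim x rho) (a : lu_car F p) (eps : R) :
  0 < eps ->
  mu (fun s => exists w, proj1_sig (lu_sig_at F ys mu p e1 a) s = Some w /\
     nu s (fun t => exists u v, proj1_sig (lu_sig_at F x rho p e2 a) t = Some u /\
          proj1_sig (lu_sig_at F x (nu s) (ys s) (hy s) w) t = Some v /\ lu_d F (x t) u v < eps)).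
Proof.
  intros he.
  assert (hr : rho = uint mu nu) by (apply uf_ext; exact hrho). subst rho.
  assert (hys : ys = fun s => ulim x (nu s)) by (apply functional_extensionality; exact hy).
  subst ys p.
  pose proof (proj2 (proj2 (proj2 F_LeftUlt)) S T mu nu x e2 a) as hii.
  assert (hlt : up_dist mu (fun s => up_dist (nu s) (fun t => lu_d F (x t)))
        (Defs.Delta (lu_sig F T x (uint mu nu) (eq_rect _ (lu_car F) a _ e2)))
        (upmap (fun s => lu_sig F T x (nu s)) (lu_sig F S (fun s => ulim x (nu s)) mu a)) < eps)
    by (rewrite hii; exact he).
  pose proof (up_dist_lt mu _ k (fun s u v => up_dist_lu_bounded (nu s) x u v) _ _ _ hlt) as hev.
  apply (uf_mono mu _ _ hev). intros s [u' [v' [hu' [hv' hd]]]].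
  simpl in hv'.
  destruct (proj1_sig (lu_sig F S (fun s => ulim x (nu s)) mu a) s) as [w|] eqn:Hw; [|discriminate].
  simpl in hv'; injection hv' as <-.
  exists w; split; [unfold lu_sig_at; rewrite lu_cast_id; exact Hw|].
  pose proof (up_dist_lt (nu s) _ k (fun t => lu_d_bounded (x t)) _ _ _ hd) as hin.
  apply (uf_mono (nu s) _ _ hin). intros t [u [v [hu [hv hduv]]]].
  exists u, v; split; [|split; [|exact hduv]].
  - rewrite (Delta_val _ _ _ hu') in hu. exact hu.
  - unfold lu_sig_at; rewrite lu_cast_id. exact hv.
Qed.

(* The case of axiom (ii) with [nu s] principal. *)
Lemma lu_sig_at_push_ev {S T} (M : S -> T) (x : T -> X) (mu : ultrafilter S)
  (rho : ultrafilter T) (hrho : forall A, rho A <-> mu (fun s => A (M s)))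
  (p : X) (e1 : p = ulim (fun s => x (M s)) mu) (e2 : p = ulim x rho) (a : lu_car F p) eps :
  0 < eps ->
  mu (fun s => exists u v, proj1_sig (lu_sig_at F (fun s => x (M s)) mu p e1 a) s = Some u /\
     proj1_sig (lu_sig_at F x rho p e2 a) (M s) = Some v /\ lu_d F (x (M s)) u v < eps).
Proof.
  intros he.
  pose proof (lu_sig_at_assoc_ev mu (fun s => principal (M s)) x (fun s => x (M s))
     (fun s => ulim_principal X X_compact X_hausdorff x (M s)) rho hrho p e1 e2 a eps he) as h.
  apply (uf_mono mu _ _ h). intros s [w [hw [u [v [hu [hv hd]]]]]].
  rewrite (lu_sig_at_principal x (M s) (x (M s)) _ eq_refl) in hv. injection hv as hvw. subst v.
  exists w, u; split; [exact hw|split; [exact hu|rewrite lu_d_sym; exact hd]].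
Qed.

Lemma Lconv_intro (eta : ultrafilter (Lcar F)) (f : Lcar F) (nu : ultrafilter X)
  (hnu : forall A, nu A <-> eta (fun g => A (projT1 g))) (hc : conv nu (projT1 f))
  (e : projT1 f = ulim (fun y => y) nu) :
  (forall eps, 0 < eps -> eta (fun g => exists z,
      proj1_sig (lu_sig_at F (fun y => y) nu (projT1 f) e (projT2 f)) (projT1 g) = Some z /\
      lu_d F (projT1 g) z (projT2 g) < eps)) ->
  Lconv F eta f.
Proof.
  intros H.
  assert (hn : nu = push (@projT1 _ _) eta) by (apply uf_ext; exact hnu). subst nu.
  split; [exact hc|]. exists e. exact H.
Qed.

Lemma Lconv_elim (eta : ultrafilter (Lcar F)) (f : Lcar F) (nu : ultrafilter X)
  (hnu : forall A, nu A <-> eta (fun g => A (projT1 g)))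
  (e : projT1 f = ulim (fun y => y) nu) :
  Lconv F eta f ->
  forall eps, 0 < eps -> eta (fun g => exists z,
      proj1_sig (lu_sig_at F (fun y => y) nu (projT1 f) e (projT2 f)) (projT1 g) = Some z /\
      lu_d F (projT1 g) z (projT2 g) < eps).
Proof.
  intros [hc [e0 H]] eps he.
  assert (hn : nu = push (@projT1 _ _) eta) by (apply uf_ext; exact hnu). subst nu.
  rewrite (lu_sig_at_irr F _ _ _ e e0). exact (H eps he).
Qed.

Lemma Lconv_proj_conv (eta : ultrafilter (Lcar F)) (f : Lcar F) (nu : ultrafilter X)
  (hnu : forall A, nu A <-> eta (fun g => A (projT1 g))) :
  Lconv F eta f -> conv nu (projT1 f).
Proof.
  intros [hc _].
  assert (hn : nu = push (@projT1 _ _) eta) by (apply uf_ext; exact hnu). subst nu. exact hc.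
Qed.

Lemma Lconv_section_near (eta : ultrafilter (Lcar F)) (f : Lcar F) (nu : ultrafilter X)
  (hnu : forall A, nu A <-> eta (fun g => A (projT1 g)))
  (e : projT1 f = ulim (fun y => y) nu) (w : lu_car F (projT1 f)) r :
  Lconv F eta f -> lu_d F _ w (projT2 f) < r ->
  eta (fun g => exists z,
      proj1_sig (lu_sig_at F (fun y => y) nu (projT1 f) e w) (projT1 g) = Some z /\
      lu_d F (projT1 g) z (projT2 g) < r).
Proof.
  intros hL hwr.
  set (dl := (r - lu_d F _ w (projT2 f)) / 2).
  assert (hdl : 0 < dl) by (unfold dl; lra).
  assert (hlip : up_dist nu (fun y => lu_d F y) (lu_sig_at F (fun y => y) nu (projT1 f) e w)
                   (lu_sig_at F (fun y => y) nu (projT1 f) e (projT2 f)) < lu_d F _ w (projT2 f) + dl)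
    by (eapply Rle_lt_trans; [apply lu_sig_at_lipschitz|lra]).
  pose proof (up_dist_lt nu _ k (fun y => lu_d_bounded y) _ _ _ hlip) as F1.
  rewrite hnu in F1.
  apply (uf_mono eta _ _ (uf_I eta _ _ F1 (Lconv_elim eta f nu hnu e hL dl hdl))).
  intros g [[u [v [hu [hv huv]]]] [v' [hv' hd]]].
  exists u; split; [exact hu|].
  rewrite hv in hv'; injection hv' as <-.
  pose proof (lu_d_tri _ u v (projT2 g)). unfold dl in *; lra.
Qed.

Lemma Lconv_principal (g : Lcar F) : Lconv F (principal g) g.
Proof.
  apply (Lconv_intro _ _ (principal (projT1 g)))
    with (e := ulim_id_of_conv X X_compact X_hausdorff _ _ (conv_principal X (projT1 g))).
  - intros A; simpl; tauto.
  - apply conv_principal.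
  - intros eps he; simpl. exists (projT2 g).
    rewrite (lu_sig_at_principal (fun y => y) (projT1 g) (projT1 g) _ eq_refl). split; [reflexivity|].
    rewrite lu_d_refl; exact he.
Qed.

Lemma Lconv_diagonal (S : Type) (z : ultrafilter S) (th : S -> ultrafilter (Lcar F))
  (g : S -> Lcar F) (h : Lcar F) :
  (forall s, Lconv F (th s) (g s)) -> Lconv F (push g z) h -> Lconv F (uint z th) h.
Proof.
  intros Hth Hh.
  set (nus := fun s => push (@projT1 _ _) (th s)).
  set (ys := fun s => projT1 (g s)).
  assert (hy : forall s, ys s = ulim (fun y => y) (nus s))
    by (intros s; apply (ulim_id_of_conv X X_compact X_hausdorff); exact (proj1 (Hth s))).
  set (nu' := uint z nus).
  assert (hch : conv (push ys z) (projT1 h)) by exact (proj1 Hh).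
  assert (hc' : conv nu' (projT1 h)).
  { intros W hW hWh. simpl. apply (uf_mono z _ _ (hch W hW hWh)). intros s hs.
    exact (proj1 (Hth s) W hW hs). }
  set (e' := ulim_id_of_conv X X_compact X_hausdorff nu' _ hc').
  assert (e1 : projT1 h = ulim ys z) by (symmetry; apply (ulimX_unique X X_compact X_hausdorff); exact hch).
  set (mu' := push ys z).
  assert (e3 : projT1 h = ulim (fun y => y) mu') by (apply (ulim_id_of_conv X X_compact X_hausdorff); exact hch).
  apply (Lconv_intro (uint z th) h nu' (fun A => iff_refl _) hc' e').
  intros eps he.
  set (dl := eps / 4).
  assert (hdl : 0 < dl) by (unfold dl; lra).
  pose proof (lu_sig_at_assoc_ev z nus (fun y => y) ys hy nu' (fun A => iff_refl _)
                (projT1 h) e1 e' (projT2 h) dl hdl) as F1.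
  pose proof (lu_sig_at_push_ev ys (fun y => y) z mu' (fun A => iff_refl _)
                (projT1 h) e1 e3 (projT2 h) dl hdl) as F2.
  pose proof (Lconv_elim (push g z) h mu' (fun A => iff_refl _) e3 Hh dl hdl) as F3.
  simpl in F3.
  apply (uf_mono z _ _ (uf_I z _ _ F1 (uf_I z _ _ F2 F3))).
  intros s [[w [hw hin]] [[u [v [hu [hv hduv]]]] [z3 [hz3 hdz3]]]].
  pose proof (eq_trans (eq_sym hw) hu) as hwu; injection hwu as <-.
  pose proof (eq_trans (eq_sym hz3) hv) as hzv; injection hzv as <-.
  assert (hwg : lu_d F (ys s) w (projT2 (g s)) < 3 * dl).
  { pose proof (lu_d_tri (ys s) w z3 (projT2 (g s))) as ht.
    change (lu_d F (ys s) z3 (projT2 (g s)) < dl) in hdz3. lra. }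
  pose proof (Lconv_section_near (th s) (g s) (nus s) (fun A => iff_refl _) (hy s) w _ (Hth s) hwg) as F4.
  apply (uf_mono (th s) _ _ (uf_I (th s) _ _ hin F4)).
  intros g' [[u1 [v1 [hu1 [hv1 hd1]]]] [v2 [hv2 hd2]]].
  exists u1; split; [exact hu1|].
  pose proof (eq_trans (eq_sym hv1) hv2) as hv12; injection hv12 as <-.
  pose proof (lu_d_tri (projT1 g') u1 v1 (projT2 g')). unfold dl in *; lra.
Qed.

Lemma Lconv_of_open_nbhds (eta : ultrafilter (Lcar F)) (f : Lcar F) :
  (forall W, opn (s := Lspace F) W -> W f -> eta W) -> Lconv F eta f.
Proof. exact (barr_conv (Lconv F) Lconv_principal Lconv_diagonal eta f). Qed.

Lemma Ld_same x (a b : lu_car F x) : Ld F (existT _ x a) (existT _ x b) = lu_d F x a b.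
Proof.
  unfold Ld; simpl. destruct (excluded_middle_informative (x = x)) as [e|n]; [|exfalso; apply n; reflexivity].
  change (lu_d F x (lu_cast F e a) b = lu_d F x a b). rewrite lu_cast_id; reflexivity.
Qed.

Lemma Ld_refl (g : Lcar F) : Ld F g g = 0.
Proof. destruct g as [x a]; rewrite Ld_same; apply lu_d_refl. Qed.

Lemma Ld_cast x y (e : x = y) (a : lu_car F x) (b : lu_car F y) :
  Ld F (existT _ x a) (existT _ y b) = lu_d F y (lu_cast F e a) b.
Proof. subst y; rewrite Ld_same; reflexivity. Qed.

Lemma Ld_sym (g h : Lcar F) : projT1 g = projT1 h -> Ld F g h = Ld F h g.
Proof.
  destruct g as [x a], h as [y b]; simpl; intros e; subst y. rewrite !Ld_same; apply lu_d_sym.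
Qed.

(* The section [sigma_mu(a)] pushes [mu] to an ultrafilter converging to [a] in [L(F)]. *)
Lemma lu_sig_at_eventually_in {S} (x : S -> X) (mu : ultrafilter S) p (e : p = ulim x mu)
  (a : lu_car F p) (W : Lcar F -> Prop) :
  opn (s := Lspace F) W -> W (existT _ p a) ->
  mu (fun s => exists z, proj1_sig (lu_sig_at F x mu p e a) s = Some z /\ W (existT _ (x s) z)).
Proof.
  intros hW hWa.
  set (c := lu_sig_at F x mu p e a).
  set (sec := fun s => existT (lu_car F) (x s)
                (match proj1_sig c s with Some z => z | None => epsilon (lu_ne F (x s)) (fun _ => True) end)).
  assert (hc : conv (push x mu) p) by (rewrite e; apply ulimX_conv; exact X_compact).
  set (e' := ulim_id_of_conv X X_compact X_hausdorff _ _ hc).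
  assert (hL : Lconv F (push sec mu) (existT _ p a)).
  { apply (Lconv_intro (push sec mu) (existT _ p a) (push x mu) (fun A => iff_refl _) hc e').
    intros eps he.
    pose proof (lu_sig_at_push_ev x (fun y => y) mu (push x mu) (fun A => iff_refl _) p e e' a eps he) as h.
    apply (uf_mono mu _ _ h). intros s [u [v [hu [hv hd]]]].
    simpl. exists v; split; [exact hv|].
    unfold sec; simpl. change (proj1_sig c s = Some u) in hu. rewrite hu.
    rewrite lu_d_sym; exact hd. }
  pose proof (hW _ hWa _ hL) as hetaW. simpl in hetaW.
  apply (uf_mono mu _ _ (uf_I mu _ _ hetaW (proj2_sig c))). intros s [h1 h2].
  unfold sec in h1. destruct (proj1_sig c s) as [w|] eqn:Hc; [|contradiction].
  exists w; split; [reflexivity|exact h1].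
Qed.

Lemma L_proj_continuous : @tcontinuous (Lspace F) X (@projT1 _ _).
Proof. intros W hW f hf eta hL. exact (proj1 hL W hW hf). Qed.

Lemma L_proj_open : @open_map (Lspace F) X (@projT1 _ _).
Proof.
  intros U hU. apply open_of_ultrafilter_nbhd. intros y [[x0 a] [hg <-]] nu hc; simpl in *.
  pose proof (lu_sig_at_eventually_in (fun y => y) nu x0
                (ulim_id_of_conv X X_compact X_hausdorff _ _ hc) a U hU hg) as h.
  apply (uf_mono nu _ _ h). intros y [z [_ hz]]. exists (existT _ y z); split; [exact hz|reflexivity].
Qed.

Lemma Ld_lt_eventually {A} (z : ultrafilter A) (g1 g2 : A -> Lcar F) x (a b : lu_car F x) r :
  Lconv F (push g1 z) (existT _ x a) -> Lconv F (push g2 z) (existT _ x b) ->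
  z (fun t => projT1 (g1 t) = projT1 (g2 t)) -> lu_d F x a b < r ->
  z (fun t => Ld F (g1 t) (g2 t) < r).
Proof.
  intros hL1 hL2 hsame hr.
  set (nu := push (fun t => projT1 (g1 t)) z).
  assert (hnu1 : forall A, nu A <-> push g1 z (fun g => A (projT1 g))) by (intros B; simpl; tauto).
  assert (hnu2 : forall A, nu A <-> push g2 z (fun g => A (projT1 g))).
  { intros B; simpl; split; intros h; apply (uf_mono z _ _ (uf_I z _ _ h hsame)); intros t [h1 h2];
      [rewrite <- h2|rewrite h2]; exact h1. }
  set (e1 := ulim_id_of_conv X X_compact X_hausdorff nu x (Lconv_proj_conv _ _ nu hnu1 hL1)).
  set (dl := (r - lu_d F x a b) / 2).
  assert (hdl : 0 < dl) by (unfold dl; lra).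
  assert (hba : lu_d F x b a < lu_d F x a b + dl) by (rewrite lu_d_sym; lra).
  pose proof (Lconv_section_near (push g1 z) (existT _ x a) nu hnu1 e1 b _ hL1 hba) as F1.
  pose proof (Lconv_elim (push g2 z) (existT _ x b) nu hnu2 e1 hL2 dl hdl) as F2.
  simpl in F1, F2.
  apply (uf_mono z _ _ (uf_I z _ _ F1 (uf_I z _ _ F2 hsame))).
  intros t [[z1 [hz1 hd1]] [[z2 [hz2 hd2]] hy]].
  revert hz1 hd1 hz2 hd2 hy; destruct (g1 t) as [y1 c1], (g2 t) as [y2 c2]; simpl.
  intros hz1 hd1 hz2 hd2 hy; subst y2.
  rewrite hz1 in hz2; injection hz2 as <-.
  rewrite Ld_same. pose proof (lu_d_tri y1 c1 z1 c2). rewrite (lu_d_sym y1 c1 z1) in *.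
  unfold dl in *; lra.
Qed.

Lemma L_usc : forall e f : Lcar F, projT1 e = projT1 f -> forall r, Ld F e f < r ->
  exists U V, opn (s := Lspace F) U /\ opn (s := Lspace F) V /\ U e /\ V f /\
    forall e' f', U e' -> V f' -> projT1 e' = projT1 f' -> Ld F e' f' < r.
Proof.
  intros e f hp r hr. apply NNPP; intros hno.
  set (Q := fun (_ : nat) (pr : Lcar F * Lcar F) =>
              projT1 (fst pr) = projT1 (snd pr) /\ r <= Ld F (fst pr) (snd pr)).
  destruct (ultrafilter_of_nbhd_witnesses (T := Lspace F) fst snd e f Q) as [z [hQ [hc1 hc2]]].
  - intros m n pr _ h; exact h.
  - intros U V n hU hV hUe hVf. apply NNPP; intros hn. apply hno.
    exists U, V; repeat split; auto. intros e' f' he' hf' hp'.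
    apply Rnot_le_lt; intros hle; apply hn; exists (e', f'); unfold Q; simpl; auto.
  - destruct e as [x a], f as [y b]; simpl in hp; subst y. rewrite Ld_same in hr.
    pose proof (Ld_lt_eventually z fst snd x a b r (Lconv_of_open_nbhds _ _ hc1) (Lconv_of_open_nbhds _ _ hc2)
                  (uf_mono z _ _ (hQ 0%nat) (fun t h => proj1 h)) hr) as hlt.
    apply (uf_not_compl z _ hlt). apply (uf_mono z _ _ (hQ 0%nat)). intros t [_ h] h'; exact (Rle_not_lt _ _ h h').
Qed.

Lemma Lconv_of_close {A} (z : ultrafilter A) (g1 g2 : A -> Lcar F) (f : Lcar F) :
  Lconv F (push g2 z) f ->
  (forall eps, 0 < eps -> z (fun t => projT1 (g1 t) = projT1 (g2 t) /\ Ld F (g1 t) (g2 t) < eps)) ->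
  Lconv F (push g1 z) f.
Proof.
  intros hL2 hclose.
  set (nu := push (fun t => projT1 (g2 t)) z).
  assert (hnu2 : forall A, nu A <-> push g2 z (fun g => A (projT1 g))) by (intros B; simpl; tauto).
  assert (hnu1 : forall A, nu A <-> push g1 z (fun g => A (projT1 g))).
  { intros B; simpl; split; intros h; apply (uf_mono z _ _ (uf_I z _ _ h (hclose 1 Rlt_0_1)));
      intros t [h1 [h2 _]]; [rewrite h2|rewrite <- h2]; exact h1. }
  pose proof (Lconv_proj_conv _ _ nu hnu2 hL2) as hc.
  set (e := ulim_id_of_conv X X_compact X_hausdorff nu _ hc).
  apply (Lconv_intro _ _ nu hnu1 hc e). intros eps he.
  pose proof (Lconv_elim (push g2 z) f nu hnu2 e hL2 (eps / 2) ltac:(lra)) as F2. simpl in F2.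
  simpl. apply (uf_mono z _ _ (uf_I z _ _ F2 (hclose (eps / 2) ltac:(lra)))).
  intros t [[z2 [hz2 hd2]] [hy hd]].
  revert hz2 hd2 hy hd; destruct (g1 t) as [y1 c1], (g2 t) as [y2 c2]; simpl.
  intros hz2 hd2 hy hd; subst y2.
  exists z2; split; [exact hz2|]. rewrite Ld_same in hd.
  pose proof (lu_d_tri y1 z2 c2 c1). rewrite (lu_d_sym y1 c2 c1) in *. lra.
Qed.

Lemma L_uniform_nbhd : forall W, opn (s := Lspace F) W -> forall f, W f ->
  exists V eps, opn (s := Lspace F) V /\ V f /\ 0 < eps /\
    (forall g, V g -> exists h, V h /\ projT1 g = projT1 h /\ Ld F g h < eps) /\
    (forall g, (exists h, V h /\ projT1 g = projT1 h /\ Ld F g h < eps) -> W g).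
Proof.
  intros W hW f hWf. apply NNPP; intros hno.
  set (Q := fun n (pr : Lcar F * Lcar F) => ~ W (fst pr) /\ projT1 (fst pr) = projT1 (snd pr) /\
                                           Ld F (fst pr) (snd pr) < / INR (S n)).
  destruct (ultrafilter_of_nbhd_witnesses (T := Lspace F) snd snd f f Q) as [z [hQ [_ hc2]]].
  - intros m n pr hnm [h1 [h2 h3]]; repeat split; auto.
    eapply Rlt_le_trans; [exact h3|apply inv_INR_S_le; exact hnm].
  - intros U V n hU hV hUf hVf. apply NNPP; intros hn. apply hno.
    exists (fun g => U g /\ V g), (/ INR (S n)).
    split; [apply opn_inter; auto|split; [auto|split; [apply inv_INR_S_pos|split]]].
    + intros g hg; exists g; repeat split; [apply hg|apply hg|rewrite Ld_refl; apply inv_INR_S_pos].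
    + intros g [h [[hUh hVh] [hp hd]]]. apply NNPP; intros hg. apply hn; exists (g, h).
      unfold Q; simpl; auto.
  - assert (hL1 : Lconv F (push fst z) f).
    { apply (Lconv_of_close z fst snd f (Lconv_of_open_nbhds _ _ hc2)).
      intros eps he; destruct (inv_INR_S_lt eps he) as [n hn].
      apply (uf_mono z _ _ (hQ n)); intros t [_ [h1 h2]]; split; [exact h1|exact (Rlt_trans _ _ _ h2 hn)]. }
    apply (uf_not_compl z (fun pr => W (fst pr)) (hW f hWf _ hL1)).
    apply (uf_mono z _ _ (hQ 0%nat)). intros t [h _]; exact h.
Qed.

(** * The unit *)

Definition unitL x (c : lu_car F x) : fib (L_obj F) x :=
  exist (fun g : Lcar F => projT1 g = x) (existT _ x c) eq_refl.
Definition unitL_inv x (a : fib (L_obj F) x) : lu_car F x := lu_cast F (proj2_sig a) (projT2 (proj1_sig a)).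

Lemma unitL_inv_unitL x c : unitL_inv x (unitL x c) = c.
Proof. reflexivity. Qed.

Lemma unitL_unitL_inv x a : unitL x (unitL_inv x a) = a.
Proof. destruct a as [[y a'] p]; simpl in p. subst y. reflexivity. Qed.

Lemma existT_unitL_inv y (a : fib (L_obj F) y) : existT (lu_car F) y (unitL_inv y a) = proj1_sig a.
Proof. destruct a as [[y' a'] p]; simpl in p; subst y'; reflexivity. Qed.

Lemma fdist_unitL_inv x (a b : fib (L_obj F) x) :
  fdist (L_obj F) x a b = lu_d F x (unitL_inv x a) (unitL_inv x b).
Proof.
  rewrite <- (unitL_unitL_inv x a), <- (unitL_unitL_inv x b). unfold fdist; simpl. apply Ld_same.
Qed.

Lemma L_obj_Bundle : is_Bundle k (L_obj F).
Proof.
  split; [|split; [exact L_usc|split; [exact L_proj_continuous|split; [exact L_proj_open|exact L_uniform_nbhd]]]].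
  intros x; apply (is_kmet_transfer k _ (lu_d F x) (unitL_inv x) (unitL x));
    [apply F_LeftUlt|apply fdist_unitL_inv|apply unitL_inv_unitL|apply unitL_unitL_inv].
Qed.

Lemma unitL_LUmor : is_LUmor F (R_obj (L_obj F)) unitL.
Proof.
  split.
  - intros x a b. change (Ld F (existT _ x a) (existT _ x b) <= lu_d F x a b). rewrite Ld_same; lra.
  - intros S x mu a.
    change (up_dist mu (fun s => fdist (L_obj F) (x s)) (Rsig (L_obj F) S x mu (unitL _ a))
             (upmap (fun s => unitL (x s)) (lu_sig F S x mu a)) = 0).
    apply (up_dist_eq0 mu _ k (fun s => fdist_bounded X k (L_obj F) L_obj_Bundle (x s))).
    intros eps he.
    destruct (L_usc (existT _ _ a) (existT _ _ a) eq_refl eps) as [U [V [hU [hV [hUa [hVa hUV]]]]]];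
      [rewrite Ld_refl; exact he|].
    pose proof (Rsig_eventually_in X X_compact k (L_obj F) L_obj_Bundle x mu (unitL _ a) U hU hUa) as h1.
    pose proof (lu_sig_at_eventually_in x mu (ulim x mu) eq_refl a V hV hVa) as h2.
    apply (uf_mono mu _ _ (uf_I mu _ _ h1 h2)). intros s [[z [hz hzU]] [w [hw hwV]]] u v hu hv.
    pose proof (eq_trans (eq_sym hz) hu) as hh; injection hh as <-.
    pose proof (eq_trans (f_equal (option_map (unitL (x s))) (eq_sym hw)) hv) as hh; simpl in hh;
      injection hh as <-.
    apply Rlt_le. unfold fdist; simpl. apply hUV; [exact hzU|exact hwV|exact (fib_proj z)].
Qed.

Lemma unitL_inv_LUmor : is_LUmor (R_obj (L_obj F)) F unitL_inv.
Proof.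
  split.
  - intros x a b. change (lu_d F x (unitL_inv x a) (unitL_inv x b) <= fdist (L_obj F) x a b).
    rewrite fdist_unitL_inv; lra.
  - intros S x mu a.
    change (up_dist mu (fun s => lu_d F (x s)) (lu_sig F S x mu (unitL_inv _ a))
             (upmap (fun s => unitL_inv (x s)) (Rsig (L_obj F) S x mu a)) = 0).
    apply (up_dist_eq0 mu _ k (fun s => lu_d_bounded (x s))).
    intros eps he.
    destruct (L_usc (proj1_sig a) (proj1_sig a) eq_refl eps) as [U [V [hU [hV [hUa [hVa hUV]]]]]];
      [rewrite Ld_refl; exact he|].
    pose proof (Rsig_eventually_in X X_compact k (L_obj F) L_obj_Bundle x mu a U hU hUa) as h1.
    assert (hVa' : V (existT _ (ulim x mu) (unitL_inv _ a))) by (rewrite existT_unitL_inv; exact hVa).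
    pose proof (lu_sig_at_eventually_in x mu (ulim x mu) eq_refl (unitL_inv _ a) V hV hVa') as h2.
    apply (uf_mono mu _ _ (uf_I mu _ _ h1 h2)). intros s [[z [hz hzU]] [w [hw hwV]]] u v hu hv.
    pose proof (eq_trans (eq_sym hw) hu) as hh; injection hh as <-.
    pose proof (eq_trans (f_equal (option_map (unitL_inv (x s))) (eq_sym hz)) hv) as hh; simpl in hh;
      injection hh as <-.
    apply Rlt_le. rewrite <- Ld_same, existT_unitL_inv, Ld_sym; [|exact (eq_sym (fib_proj z))].
    apply hUV; [exact hzU|exact hwV|exact (fib_proj z)].
Qed.

Lemma unitL_iso : LU_iso F (R_obj (L_obj F)) unitL.
Proof.
  split; [exact unitL_LUmor|]. exists unitL_inv.
  split; [exact unitL_inv_LUmor|split; [exact unitL_inv_unitL|exact unitL_unitL_inv]].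
Qed.

End LeftUltSide.

Lemma LUmor_cast {X : Space} (F G : LUdata X) (al : forall x, lu_car F x -> lu_car G x) x y (e : x = y) a :
  al y (lu_cast F e a) = lu_cast G e (al x a).
Proof. subst y; reflexivity. Qed.

(* [L_mor al] preserves convergence: the sections of [G] through [al] of the limit are
   [al] of the sections of [F], up to the [sigma]-naturality defect, which vanishes. *)
Lemma L_mor_continuous (X : Space) (X_compact : compact_space X) (X_hausdorff : hausdorff_space X)
  (k : R) (F G : LUdata X) (al : forall x, lu_car F x -> lu_car G x) :
  is_LeftUlt k F -> is_LeftUlt k G -> is_LUmor F G al ->
  @tcontinuous (Lspace F) (Lspace G) (L_mor al).
Proof.
  intros hF hG [hal1 hal2] W hW. simpl in hW |- *. intros g hg eta hL.
  set (nu := push (@projT1 _ _) eta).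
  pose proof (Lconv_proj_conv X F eta g nu (fun A => iff_refl _) hL) as hc.
  set (e := ulim_id_of_conv X X_compact X_hausdorff nu _ hc).
  change ((push (L_mor al) eta) W); apply (hW _ hg).
  apply (Lconv_intro X G (push (L_mor al) eta) (L_mor al g) nu (fun A => iff_refl _) hc e).
  intros eps he.
  pose proof (Lconv_elim X F eta g nu (fun A => iff_refl _) e hL (eps / 2) ltac:(lra)) as F1.
  pose proof (hal2 X (fun y => y) nu (lu_cast F e (projT2 g))) as h0.
  rewrite LUmor_cast in h0.
  assert (hlt : up_dist nu (fun y => lu_d G y)
                  (lu_sig_at G (fun y => y) nu (projT1 g) e (al _ (projT2 g)))
                  (upmap (fun y => al y) (lu_sig_at F (fun y => y) nu (projT1 g) e (projT2 g))) < eps / 2)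
    by (refine (eq_ind_r (fun r => r < eps / 2) _ h0); lra).
  pose proof (up_dist_lt nu _ k (fun y => lu_d_bounded X k G hG y) _ _ _ hlt) as F2.
  simpl. apply (uf_mono eta _ _ (uf_I eta _ _ F1 F2)).
  intros g' [[w [hw hd]] [u [v [hu [hv huv]]]]].
  exists u; split; [exact hu|].
  pose proof (eq_trans (f_equal (option_map (al (projT1 g'))) (eq_sym hw)) hv) as hh; simpl in hh;
    injection hh as <-.
  pose proof (lu_d_tri X k G hG _ u (al _ w) (al _ (projT2 g'))).
  pose proof (hal1 _ w (projT2 g')). lra.
Qed.

Lemma L_mor_Bmor (X : Space) (X_compact : compact_space X) (X_hausdorff : hausdorff_space X) (k : R)
  (F G : LUdata X) (al : forall x, lu_car F x -> lu_car G x) :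
  is_LeftUlt k F -> is_LeftUlt k G -> is_LUmor F G al ->
  is_Bmor (L_obj F) (L_obj G) (L_mor al).
Proof.
  intros hF hG hal. split; [intros e; reflexivity|split].
  - exact (L_mor_continuous X X_compact X_hausdorff k F G al hF hG hal).
  - intros [x a] [y b]; simpl; intros e; subst y. unfold L_mor; simpl. rewrite !Ld_same. apply (proj1 hal).
Qed.

(** * The counit *)

Definition counit {X : Space} (E : BunData X) (g : tot (L_obj (R_obj E))) : tot E := proj1_sig (projT2 g).
Definition counit_inv {X : Space} (E : BunData X) (e : tot E) : tot (L_obj (R_obj E)) :=
  existT (lu_car (R_obj E)) (proj E e) (exist (fun e' => proj E e' = proj E e) e eq_refl).

Lemma lu_cast_R_obj {X : Space} (E : BunData X) x y (e : x = y) (a : lu_car (R_obj E) x) :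
  proj1_sig (lu_cast (R_obj E) e a) = proj1_sig a.
Proof. subst y; reflexivity. Qed.

Section Counit.
Variable X : Space.
Hypothesis X_compact : compact_space X.
Hypothesis X_hausdorff : hausdorff_space X.
Variable k : R.
Variable E : BunData X.
Hypothesis E_bundle : is_Bundle k E.

Lemma counit_continuous : tcontinuous (counit E).
Proof.
  intros W hW g hg eta hL.
  set (nu := push (@projT1 _ _) eta).
  pose proof (Lconv_proj_conv X (R_obj E) eta g nu (fun A => iff_refl _) hL) as hc.
  set (e := ulim_id_of_conv X X_compact X_hausdorff nu _ hc).
  destruct (proj2 (proj2 (proj2 (proj2 E_bundle))) W hW _ hg) as [V [dl [hV [hVg [hdl [_ hVW]]]]]].
  pose proof (Lconv_elim X (R_obj E) eta g nu (fun A => iff_refl _) e hL dl hdl) as F1.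
  assert (hVc : V (proj1_sig (lu_cast (R_obj E) e (projT2 g)))) by (rewrite lu_cast_R_obj; exact hVg).
  pose proof (sigX_eventually_in X X_compact k E E_bundle (push (fun y => y) nu)
                (lu_cast (R_obj E) e (projT2 g)) V hV hVc) as F2.
  simpl in F2. change (eta (fun g' => W (counit E g'))).
  apply (uf_mono eta _ _ (uf_I eta _ _ F1 F2)). intros g' [[z [hz hd]] [z' [hz' hz'V]]].
  pose proof (eq_trans (eq_sym hz) hz') as hh; injection hh as <-.
  assert (hp : proj E (counit E g') = proj E (proj1_sig z))
    by (unfold counit; rewrite (fib_proj (projT2 g')), (fib_proj z); reflexivity).
  apply hVW. exists (proj1_sig z); split; [exact hz'V|split; [exact hp|]].
  rewrite (bd_sym X k E E_bundle _ _ hp); exact hd.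
Qed.

Lemma counit_inv_continuous : tcontinuous (counit_inv E).
Proof.
  intros W hW. apply open_of_ultrafilter_nbhd. intros e he eta hc.
  change ((push (counit_inv E) eta) W). apply (hW _ he).
  set (nu := push (proj E) eta).
  assert (hcn : conv nu (proj E e)).
  { intros W' hW' hW'e. exact (hc _ (proj1 (proj2 (proj2 E_bundle)) W' hW') hW'e). }
  set (e' := ulim_id_of_conv X X_compact X_hausdorff nu _ hcn).
  apply (Lconv_intro X (R_obj E) (push (counit_inv E) eta) (counit_inv E e) nu (fun A => iff_refl _) hcn e').
  intros eps he'.
  destruct (bd_small_nbhds X k E E_bundle e eps he') as [U [V [hU [hV [hUe [hVe hUV]]]]]].
  assert (hUc : U (proj1_sig (lu_cast (R_obj E) e' (projT2 (counit_inv E e)))))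
    by (rewrite lu_cast_R_obj; exact hUe).
  pose proof (sigX_eventually_in X X_compact k E E_bundle (push (fun y => y) nu)
                (lu_cast (R_obj E) e' (projT2 (counit_inv E e))) U hU hUc) as F1.
  simpl in F1 |- *.
  apply (uf_mono eta _ _ (uf_I eta _ _ F1 (hc V hV hVe))). intros e'' [[z [hz hzU]] hV''].
  exists z; split; [exact hz|]. unfold fdist; simpl.
  apply hUV; [exact hzU|exact hV''|exact (fib_proj z)].
Qed.

Lemma counit_iso : Bun_iso (L_obj (R_obj E)) E (counit E).
Proof.
  split; [split; [|split]|].
  - intros g; exact (fib_proj (projT2 g)).
  - exact counit_continuous.
  - intros [x a] [y b]; simpl; intros e; subst y. rewrite Ld_same. apply Rle_refl.
  - exists (counit_inv E). split; [split; [|split]|split].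
    + intros e; reflexivity.
    + exact counit_inv_continuous.
    + intros e f hp. unfold counit_inv; simpl. rewrite (Ld_cast X (R_obj E) _ _ hp).
      change (bd E (proj1_sig (lu_cast (R_obj E) hp (exist (fun e' => proj E e' = proj E e) e eq_refl))) f
              <= bd E e f).
      rewrite lu_cast_R_obj. apply Rle_refl.
    + intros [x [e p]]; unfold counit_inv, counit; simpl. subst x. reflexivity.
    + intros e; reflexivity.
Qed.

End Counit.

Theorem theorem4p2 (X : Space) (k : R) :
  compact_space X -> hausdorff_space X -> 0 < k ->
  (forall E : BunData X, is_Bundle k E -> is_LeftUlt k (R_obj E)) /\
  (forall (E E' : BunData X) (psi : tot E -> tot E') (h : over E E' psi),
      is_Bundle k E -> is_Bundle k E' -> is_Bmor E E' psi ->
      is_LUmor (R_obj E) (R_obj E') (R_mor h)) /\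
  (forall (E : BunData X) (h : over E E (fun e => e)) x (a : fib E x),
      R_mor h x a = a) /\
  (forall (E E' E'' : BunData X) (psi : tot E -> tot E') (psi' : tot E' -> tot E'')
          (h : over E E' psi) (h' : over E' E'' psi')
          (h'' : over E E'' (fun e => psi' (psi e))) x (a : fib E x),
      R_mor h'' x a = R_mor h' x (R_mor h x a)) /\
  (forall F : LUdata X, is_LeftUlt k F -> is_Bundle k (L_obj F)) /\
  (forall (F G : LUdata X) (al : forall x, lu_car F x -> lu_car G x),
      is_LeftUlt k F -> is_LeftUlt k G -> is_LUmor F G al ->
      is_Bmor (L_obj F) (L_obj G) (L_mor al)) /\
  (forall (F : LUdata X) (g : Lcar F), L_mor (fun x (a : lu_car F x) => a) g = g) /\
  (forall (F G H : LUdata X) (al : forall x, lu_car F x -> lu_car G x)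
          (be : forall x, lu_car G x -> lu_car H x) (g : Lcar F),
      L_mor (fun x a => be x (al x a)) g = L_mor be (L_mor al g)) /\
  exists (eta : forall (F : LUdata X) x, lu_car F x -> lu_car (R_obj (L_obj F)) x)
         (eps : forall E : BunData X, tot (L_obj (R_obj E)) -> tot E),
    (forall F, is_LeftUlt k F -> LU_iso F (R_obj (L_obj F)) (eta F)) /\
    (forall (F G : LUdata X) (al : forall x, lu_car F x -> lu_car G x),
        is_LeftUlt k F -> is_LeftUlt k G -> is_LUmor F G al ->
        forall x (a : lu_car F x),
          proj1_sig (eta G x (al x a)) = L_mor al (proj1_sig (eta F x a))) /\
    (forall E, is_Bundle k E -> Bun_iso (L_obj (R_obj E)) E (eps E)) /\
    (forall (E E' : BunData X) (psi : tot E -> tot E') (h : over E E' psi),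
        is_Bundle k E -> is_Bundle k E' -> is_Bmor E E' psi ->
        forall g, psi (eps E g) = eps E' (@L_mor X (R_obj E) (R_obj E') (R_mor h) g)) /\
    (forall E, is_Bundle k E ->
        forall x (a : fib E x), eps E (proj1_sig (eta (R_obj E) x a)) = proj1_sig a) /\
    (forall F, is_LeftUlt k F ->
        forall g : Lcar F, eps (L_obj F) (L_mor (eta F) g) = g).
Proof.
  intros hc hh _.
  split; [exact (R_obj_LeftUlt X hc k)|].
  split; [exact (R_mor_LUmor X hc k)|].
  split; [exact (R_mor_id X)|].
  split; [exact (R_mor_comp X)|].
  split; [exact (L_obj_Bundle X hc hh k)|].
  split; [exact (L_mor_Bmor X hc hh k)|].
  split; [intros F [x a]; reflexivity|].
  split; [reflexivity|].
  exists (unitL X), (counit (X := X)).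
  split; [exact (unitL_iso X hc hh k)|].
  split; [reflexivity|].
  split; [exact (counit_iso X hc hh k)|].
  split; [reflexivity|].
  split; [reflexivity|].
  intros F _ [x a]; reflexivity.
Qed.
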